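(* Let $B$ be the open unit disk. Let $\Phi:\partial B\to\gamma$ be an orientation preserving $C^1$ diffeomorphism onto a simple closed curve $\gamma$, $D$ the bounded domain with $\partial D=\gamma$, and $U\in C^2(B;\mathbb R^2)\cap C(\overline B;\mathbb R^2)$ the solution of $\Delta U=0$ in $B$, $U=\Phi$ on $\partial B$, and assume $U\in C^1(\overline B;\mathbb R^2)$. Then $\det DU>0$ everywhere on $\Phi^{-1}(\gamma_c)$.
   Context: With $\mathrm{co}(D)$ the convex hull of $D$, the convex part of $\partial D$ is the closed set $\gamma_c=\partial D\cap\partial(\mathrm{co}(D))$. *)

From Stdlib Require Import Reals.
From Coquelicot Require Import Coquelicot.
Open Scope R_scope.

Definition pt := (R * R)%type.

Definition dist2 (p q : pt) : R :=
  sqrt ((fst p - fst q) ^ 2 + (snd p - snd q) ^ 2).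

Definition in_B (p : pt) : Prop := fst p ^ 2 + snd p ^ 2 < 1.
Definition in_clB (p : pt) : Prop := fst p ^ 2 + snd p ^ 2 <= 1.
Definition on_circle (p : pt) : Prop := fst p ^ 2 + snd p ^ 2 = 1.

Definition interior (S : pt -> Prop) (p : pt) : Prop :=
  exists e, 0 < e /\ forall q, dist2 p q < e -> S q.
Definition closure (S : pt -> Prop) (p : pt) : Prop :=
  forall e, 0 < e -> exists q, S q /\ dist2 p q < e.
Definition boundary (S : pt -> Prop) (p : pt) : Prop :=
  closure S p /\ ~ interior S p.
Definition is_open (S : pt -> Prop) : Prop := forall p, S p -> interior S p.
Definition is_connected (S : pt -> Prop) : Prop :=
  ~ exists A1 A2 : pt -> Prop,
      is_open A1 /\ is_open A2 /\
      (forall p, S p -> A1 p \/ A2 p) /\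
      (forall p, S p -> A1 p -> A2 p -> False) /\
      (exists p, S p /\ A1 p) /\ (exists p, S p /\ A2 p).
Definition is_bounded (S : pt -> Prop) : Prop :=
  exists M, forall p, S p -> dist2 p (0, 0) <= M.
Definition is_domain (S : pt -> Prop) : Prop :=
  is_open S /\ is_connected S /\ exists p, S p.

Definition is_convex (C : pt -> Prop) : Prop :=
  forall p q t, C p -> C q -> 0 <= t <= 1 ->
    C (t * fst p + (1 - t) * fst q, t * snd p + (1 - t) * snd q).
Definition co (D : pt -> Prop) (p : pt) : Prop :=
  forall C, is_convex C -> (forall q, D q -> C q) -> C p.

Definition gamma_c (D : pt -> Prop) (p : pt) : Prop :=
  boundary D p /\ boundary (co D) p.

Definition contR_at_in (S : pt -> Prop) (f : pt -> R) (p : pt) : Prop :=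
  forall e, 0 < e -> exists d, 0 < d /\
    forall q, S q -> dist2 p q < d -> Rabs (f q - f p) < e.
Definition cont_on (S : pt -> Prop) (F : pt -> pt) : Prop :=
  forall p, S p -> forall e, 0 < e -> exists d, 0 < d /\
    forall q, S q -> dist2 p q < d -> dist2 (F q) (F p) < e.

Definition px (f : pt -> R) (p : pt) : R := Derive (fun s => f (s, snd p)) (fst p).
Definition py (f : pt -> R) (p : pt) : R := Derive (fun s => f (fst p, s)) (snd p).
Definition ex_px (f : pt -> R) (p : pt) : Prop := ex_derive (fun s => f (s, snd p)) (fst p).
Definition ex_py (f : pt -> R) (p : pt) : Prop := ex_derive (fun s => f (fst p, s)) (snd p).

Definition C2_on_B (f : pt -> R) : Prop :=
  forall p, in_B p ->
    ex_px f p /\ ex_py f p /\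
    ex_px (px f) p /\ ex_py (px f) p /\ ex_px (py f) p /\ ex_py (py f) p /\
    contR_at_in in_B f p /\ contR_at_in in_B (px f) p /\ contR_at_in in_B (py f) p /\
    contR_at_in in_B (px (px f)) p /\ contR_at_in in_B (py (px f)) p /\
    contR_at_in in_B (px (py f)) p /\ contR_at_in in_B (py (py f)) p.

Definition laplacian (f : pt -> R) (p : pt) : R := px (px f) p + py (py f) p.

Definition phi1 (Phi : pt -> pt) (t : R) : R := fst (Phi (cos t, sin t)).
Definition phi2 (Phi : pt -> pt) (t : R) : R := snd (Phi (cos t, sin t)).

(* Phi : dB -> gamma is a C^1 diffeomorphism onto its image gamma
   (a simple closed C^1 curve): C^1 in the angle, non-vanishing
   tangent, injective on the circle. *)
Definition C1_diffeo_circle (Phi : pt -> pt) : Prop :=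
  (forall t, ex_derive (phi1 Phi) t /\ ex_derive (phi2 Phi) t) /\
  (forall t, continuous (Derive (phi1 Phi)) t /\ continuous (Derive (phi2 Phi)) t) /\
  (forall t, (Derive (phi1 Phi) t, Derive (phi2 Phi) t) <> (0, 0)) /\
  (forall p q, on_circle p -> on_circle q -> Phi p = Phi q -> p = q).

Definition image_circle (Phi : pt -> pt) (p : pt) : Prop :=
  exists q, on_circle q /\ Phi q = p.

(* Orientation preserving (dB counterclockwise, gamma = dD with its
   boundary orientation): D lies to the left of the tangent, i.e. the
   inward normal J phi'(t) points into D. *)
Definition orientation_preserving (Phi : pt -> pt) (D : pt -> Prop) : Prop :=
  forall t, exists e, 0 < e /\ forall s, 0 < s < e ->
    D (phi1 Phi t - s * Derive (phi2 Phi) t, phi2 Phi t + s * Derive (phi1 Phi) t).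

From Pilot Require Import Defs.
From Stdlib Require Import Reals.
From Coquelicot Require Import Coquelicot.
From Stdlib Require Import Lra Psatz List Classical ClassicalEpsilon.
Open Scope R_scope.

(* Let [z = Phi(e^{it})] lie on the convex part of the boundary and let [n] be the
   inner normal of [gamma] at [z].  Since [z] is not interior to [co D], the tangent line
   at [z] supports [D]: [n . (w - z) >= 0] for every [w] on [gamma] (otherwise a ball
   centred on the tangent line would lie in [co D] and make [z] interior), and this
   inequality is strict somewhere because a closed regular curve cannot lie on a line.
   Hence [G = n . (U - z)] is harmonic, nonnegative on the circle, positive somewhere
   and vanishes at [e^{it}], so by Hopf's lemma (proved with the Poisson kernel and
   [1/|x|^2] as barriers in the weak maximum principle) its outward radial derivative
   at [e^{it}] is negative.  Writing the tangential derivative of [U] at [e^{it}] as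
   [Phi'(t)], that radial derivative equals [- det DU(e^{it})]. *)

(** * Euclidean distance and continuity *)

Lemma sqrt_sum_sq_le_Rabs a b : sqrt (a ^ 2 + b ^ 2) <= Rabs a + Rabs b.
Proof.
  pose proof (Rabs_pos a); pose proof (Rabs_pos b).
  rewrite <- (sqrt_pow2 (Rabs a + Rabs b)) by lra.
  apply sqrt_le_1_alt.
  rewrite <- (pow2_abs a), <- (pow2_abs b). nra.
Qed.

Lemma Rabs_le_sqrt_sum_sq a b : Rabs a <= sqrt (a ^ 2 + b ^ 2).
Proof.
  rewrite <- (sqrt_pow2 (Rabs a)) by apply Rabs_pos.
  apply sqrt_le_1_alt. rewrite pow2_abs. nra.
Qed.

Lemma sqrt_sum_sq_triang a b c d :
  sqrt ((a + c) ^ 2 + (b + d) ^ 2) <= sqrt (a ^ 2 + b ^ 2) + sqrt (c ^ 2 + d ^ 2).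
Proof.
  set (x := sqrt (a ^ 2 + b ^ 2)). set (y := sqrt (c ^ 2 + d ^ 2)).
  assert (hx : 0 <= x) by apply sqrt_pos. assert (hy : 0 <= y) by apply sqrt_pos.
  assert (hx2 : x * x = a ^ 2 + b ^ 2) by (apply sqrt_sqrt; nra).
  assert (hy2 : y * y = c ^ 2 + d ^ 2) by (apply sqrt_sqrt; nra).
  rewrite <- (sqrt_pow2 (x + y)) by lra.
  apply sqrt_le_1_alt.
  assert (cauchy_schwarz : a * c + b * d <= x * y).
  { destruct (Rle_dec (a * c + b * d) 0).
    { assert (0 <= x * y) by (apply Rmult_le_pos; auto). lra. }
    apply Rsqr_incr_0_var; [unfold Rsqr | apply Rmult_le_pos; auto].
    replace (x * y * (x * y)) with ((x * x) * (y * y)) by ring. rewrite hx2, hy2.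
    assert (0 <= (a * d - b * c) ^ 2) by apply pow2_ge_0. nra. }
  nra.
Qed.

Lemma sqrt_sum_sq_scal k u1 u2 :
  sqrt ((k * u1) ^ 2 + (k * u2) ^ 2) = Rabs k * sqrt (u1 ^ 2 + u2 ^ 2).
Proof.
  replace ((k * u1) ^ 2 + (k * u2) ^ 2) with (k ^ 2 * (u1 ^ 2 + u2 ^ 2)) by ring.
  rewrite sqrt_mult_alt by apply pow2_ge_0.
  rewrite <- (pow2_abs k), sqrt_pow2 by apply Rabs_pos. reflexivity.
Qed.

Lemma dist2_le_Rabs p q : dist2 p q <= Rabs (fst p - fst q) + Rabs (snd p - snd q).
Proof. apply sqrt_sum_sq_le_Rabs. Qed.

Lemma Rabs_fst_le_dist2 p q : Rabs (fst p - fst q) <= dist2 p q.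
Proof. apply Rabs_le_sqrt_sum_sq. Qed.

Lemma Rabs_snd_le_dist2 p q : Rabs (snd p - snd q) <= dist2 p q.
Proof. unfold dist2. rewrite Rplus_comm. apply Rabs_le_sqrt_sum_sq. Qed.

Lemma dist2_triang p q r : dist2 p r <= dist2 p q + dist2 q r.
Proof.
  unfold dist2.
  replace (fst p - fst r) with ((fst p - fst q) + (fst q - fst r)) by ring.
  replace (snd p - snd r) with ((snd p - snd q) + (snd q - snd r)) by ring.
  apply sqrt_sum_sq_triang.
Qed.

Lemma dist2_lt_half p q d :
  Rabs (fst p - fst q) < d / 2 -> Rabs (snd p - snd q) < d / 2 -> dist2 p q < d.
Proof. intros. pose proof (dist2_le_Rabs p q). lra. Qed.

Lemma contR_at_in_subset S T f p :
  (forall q, S q -> T q) -> contR_at_in T f p -> contR_at_in S f p.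
Proof. intros ST C e he. destruct (C e he) as [d [hd Hd]]. exists d; split; auto. Qed.

Lemma contR_at_in_ext S f g p :
  (forall q, f q = g q) -> contR_at_in S f p -> contR_at_in S g p.
Proof.
  intros E C e he. destruct (C e he) as [d [hd H]].
  exists d; split; auto. intros. rewrite <- !E. auto.
Qed.

Lemma contR_at_in_const S c p : contR_at_in S (fun _ => c) p.
Proof.
  intros e he. exists 1; split; [lra|]. intros.
  unfold Rminus. rewrite Rplus_opp_r, Rabs_R0. lra.
Qed.

Lemma contR_at_in_fst S p : contR_at_in S fst p.
Proof.
  intros e he. exists e; split; auto. intros q _ h.
  rewrite Rabs_minus_sym. pose proof (Rabs_fst_le_dist2 p q). lra.
Qed.

Lemma contR_at_in_snd S p : contR_at_in S snd p.
Proof.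
  intros e he. exists e; split; auto. intros q _ h.
  rewrite Rabs_minus_sym. pose proof (Rabs_snd_le_dist2 p q). lra.
Qed.

Lemma contR_at_in_plus S f g p :
  contR_at_in S f p -> contR_at_in S g p -> contR_at_in S (fun q => f q + g q) p.
Proof.
  intros Cf Cg e he.
  destruct (Cf (e / 2)) as [d1 [h1 H1]]; [lra|].
  destruct (Cg (e / 2)) as [d2 [h2 H2]]; [lra|].
  exists (Rmin d1 d2); split; [apply Rmin_pos; auto|].
  intros q hq hd. pose proof (Rmin_l d1 d2); pose proof (Rmin_r d1 d2).
  specialize (H1 q hq ltac:(lra)). specialize (H2 q hq ltac:(lra)).
  replace (f q + g q - (f p + g p)) with ((f q - f p) + (g q - g p)) by ring.
  pose proof (Rabs_triang (f q - f p) (g q - g p)). lra.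
Qed.

Lemma contR_at_in_scal S c f p : contR_at_in S f p -> contR_at_in S (fun q => c * f q) p.
Proof.
  intros Cf e he. pose proof (Rabs_pos c).
  destruct (Cf (e / (Rabs c + 1))) as [d [hd Hd]]; [apply Rdiv_lt_0_compat; lra|].
  exists d; split; auto. intros q hq hdq. specialize (Hd q hq hdq).
  replace (c * f q - c * f p) with (c * (f q - f p)) by ring. rewrite Rabs_mult.
  pose proof (Rabs_pos (f q - f p)).
  assert (Rabs (f q - f p) * (Rabs c + 1) < e).
  { apply (Rmult_lt_compat_r (Rabs c + 1)) in Hd; [|lra]. field_simplify in Hd; lra. }
  nra.
Qed.

Lemma contR_at_in_mult S f g p :
  contR_at_in S f p -> contR_at_in S g p -> contR_at_in S (fun q => f q * g q) p.
Proof.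
  intros Cf Cg e he.
  pose proof (Rabs_pos (f p)); pose proof (Rabs_pos (g p)).
  set (M := Rabs (f p) + Rabs (g p) + 1).
  assert (hM : 1 <= M) by (unfold M; lra).
  set (e' := Rmin 1 (e / (4 * M))).
  assert (he' : 0 < e') by (apply Rmin_pos; [lra | apply Rdiv_lt_0_compat; lra]).
  assert (e' <= 1) by apply Rmin_l. assert (e' <= e / (4 * M)) by apply Rmin_r.
  destruct (Cf e' he') as [d1 [h1 Hf]]. destruct (Cg e' he') as [d2 [h2 Hg]].
  exists (Rmin d1 d2); split; [apply Rmin_pos; auto|].
  intros q hq hd. pose proof (Rmin_l d1 d2); pose proof (Rmin_r d1 d2).
  specialize (Hf q hq ltac:(lra)). specialize (Hg q hq ltac:(lra)).
  replace (f q * g q - f p * g p) with ((f q - f p) * g q + f p * (g q - g p)) by ring.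
  eapply Rle_lt_trans; [apply Rabs_triang|]. rewrite !Rabs_mult.
  assert (Rabs (g q) <= Rabs (g p) + 1).
  { pose proof (Rabs_triang (g p) (g q - g p)) as Ht.
    replace (g p + (g q - g p)) with (g q) in Ht by ring. lra. }
  pose proof (Rabs_pos (f q - f p)); pose proof (Rabs_pos (g q - g p)).
  assert (Rabs (f q - f p) * Rabs (g q) <= e' * M)
    by (apply Rmult_le_compat; try apply Rabs_pos; unfold M; lra).
  assert (Rabs (f p) * Rabs (g q - g p) <= M * e')
    by (apply Rmult_le_compat; unfold M; lra).
  assert (e' * M <= e / 4).
  { replace (e / 4) with (e / (4 * M) * M) by (field; lra).
    apply Rmult_le_compat_r; lra. }
  lra.
Qed.

Lemma contR_at_in_inv S f p :
  f p <> 0 -> contR_at_in S f p -> contR_at_in S (fun q => / f q) p.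
Proof.
  intros nz Cf e he.
  set (a := Rabs (f p)). assert (ha : 0 < a) by (apply Rabs_pos_lt; auto).
  assert (Ea : Rabs (f p) = a) by reflexivity. clearbody a.
  set (e' := Rmin (a / 2) (e * a * a / 2)).
  assert (he' : 0 < e').
  { apply Rmin_pos; [lra|]. apply Rdiv_lt_0_compat; [|lra].
    repeat apply Rmult_lt_0_compat; lra. }
  assert (e' <= a / 2) by apply Rmin_l. assert (e' <= e * a * a / 2) by apply Rmin_r.
  destruct (Cf e' he') as [d [hd Hd]]. exists d; split; auto.
  intros q hq hdq. specialize (Hd q hq hdq).
  assert (hfq : a / 2 <= Rabs (f q)).
  { pose proof (Rabs_triang (f q) (- (f q - f p))) as Ht. rewrite Rabs_Ropp in Ht.
    replace (f q + - (f q - f p)) with (f p) in Ht by ring. lra. }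
  assert (nzq : f q <> 0) by (intro E; rewrite E, Rabs_R0 in hfq; lra).
  replace (/ f q - / f p) with ((f p - f q) / (f q * f p)) by (field; auto).
  unfold Rdiv. rewrite Rabs_mult, Rabs_inv, Rabs_mult, Ea, Rabs_minus_sym.
  apply (Rmult_lt_reg_r (Rabs (f q) * a)); [nra|].
  rewrite Rmult_assoc, Rinv_l, Rmult_1_r by nra.
  assert (e * (a / 2 * a) <= e * (Rabs (f q) * a)) by (apply Rmult_le_compat_l; nra).
  nra.
Qed.

Lemma contR_at_in_affine S c0 c1 c2 p :
  contR_at_in S (fun q => c0 + c1 * fst q + c2 * snd q) p.
Proof.
  apply contR_at_in_plus; [apply contR_at_in_plus|];
    auto using contR_at_in_const, contR_at_in_scal, contR_at_in_fst, contR_at_in_snd.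
Qed.

Lemma contR_at_in_norm_sq S p : contR_at_in S (fun q => fst q ^ 2 + snd q ^ 2) p.
Proof.
  apply (contR_at_in_ext S (fun q => fst q * fst q + snd q * snd q)); [intro; ring|].
  apply contR_at_in_plus; apply contR_at_in_mult;
    auto using contR_at_in_fst, contR_at_in_snd.
Qed.

Lemma contR_at_in_lin_comb S f g c1 c2 k1 k2 p :
  contR_at_in S f p -> contR_at_in S g p ->
  contR_at_in S (fun q => c1 * (f q - k1) + c2 * (g q - k2)) p.
Proof.
  intros Cf Cg.
  apply (contR_at_in_ext S (fun q => c1 * (f q + - k1) + c2 * (g q + - k2))); [intro; ring|].
  apply contR_at_in_plus; apply contR_at_in_scal; apply contR_at_in_plus;
    auto using contR_at_in_const.
Qed.

Lemma contR_at_in_fst_comp S F p : cont_on S F -> S p -> contR_at_in S (fun q => fst (F q)) p.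
Proof.
  intros C Sp e he. destruct (C p Sp e he) as [d [hd H]]. exists d; split; auto.
  intros q Sq hq. specialize (H q Sq hq). pose proof (Rabs_fst_le_dist2 (F q) (F p)). lra.
Qed.

Lemma contR_at_in_snd_comp S F p : cont_on S F -> S p -> contR_at_in S (fun q => snd (F q)) p.
Proof.
  intros C Sp e he. destruct (C p Sp e he) as [d [hd H]]. exists d; split; auto.
  intros q Sq hq. specialize (H q Sq hq). pose proof (Rabs_snd_le_dist2 (F q) (F p)). lra.
Qed.

(** * Compactness and the weak maximum principle *)

Definition is_closed (S : pt -> Prop) : Prop := forall p, closure S p -> S p.

Definition within_unit_square (S : pt -> Prop) : Prop :=
  forall p, S p -> -1 <= fst p <= 1 /\ -1 <= snd p <= 1.

Lemma closure_mono (A B : pt -> Prop) q :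
  (forall x, A x -> B x) -> closure A q -> closure B q.
Proof. intros sub c e he. destruct (c e he) as [x [Ax hx]]. exists x; split; auto. Qed.

(* A gauge for Cousin's lemma ([compactness_list]): near a point of [S], [f] varies by
   less than 1; near a point outside the closed set [S], there is no point of [S]. *)
Lemma contR_gauge S f (tp : pt) : is_closed S -> (S tp -> contR_at_in S f tp) ->
  exists r : posreal,
    (S tp /\ forall x, S x -> dist2 tp x < r -> Rabs (f x - f tp) < 1) \/
    (~ S tp /\ forall x, dist2 tp x < r -> ~ S x).
Proof.
  intros cS cf. destruct (classic (S tp)) as [h|h].
  - destruct (cf h 1 ltac:(lra)) as [d [hd H]]. exists (mkposreal d hd). left; split; auto.
  - assert (~ closure S tp) as ncl by (intro c; apply h, cS, c).
    apply not_all_ex_not in ncl. destruct ncl as [e He].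
    apply imply_to_and in He. destruct He as [he He].
    exists (mkposreal e he). right; split; auto.
    intros x hx Sx. apply He. exists x; split; auto.
Qed.

Fixpoint max_plus_one (f : pt -> R) (l : list (Compactness.Tn 2 R)) : R :=
  match l with
  | nil => 0
  | t :: l' => Rmax (f (fst t, fst (snd t)) + 1) (max_plus_one f l')
  end.

Lemma max_plus_one_ge f l t : In t l -> f (fst t, fst (snd t)) + 1 <= max_plus_one f l.
Proof.
  induction l as [|t' l IH]; simpl; [tauto|].
  intros [<-|h]; [apply Rmax_l|]. eapply Rle_trans; [apply IH; auto | apply Rmax_r].
Qed.

Lemma contR_bounded_above S f :
  is_closed S -> within_unit_square S -> (forall p, S p -> contR_at_in S f p) ->
  exists M, forall p, S p -> f p <= M.
Proof.
  intros cS bS cf.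
  assert (G : forall t : Compactness.Tn 2 R, {r : posreal |
    (S (fst t, fst (snd t)) /\ forall x, S x -> dist2 (fst t, fst (snd t)) x < r ->
        Rabs (f x - f (fst t, fst (snd t))) < 1) \/
    (~ S (fst t, fst (snd t)) /\ forall x, dist2 (fst t, fst (snd t)) x < r -> ~ S x)}).
  { intro t. apply constructive_indefinite_description. apply contR_gauge; auto. }
  set (delta := fun t => mkposreal (proj1_sig (G t) / 4)
                  ltac:(pose proof (cond_pos (proj1_sig (G t))); lra)).
  apply NNPP. intro Hn.
  apply (compactness_list 2 (-1, (-1, tt)) (1, (1, tt)) delta). intros [l Hl].
  apply Hn. exists (max_plus_one f l). intros [x1 x2] Sx.
  destruct (bS _ Sx) as [b1 b2]. simpl in b1, b2.
  destruct (Hl (x1, (x2, tt))) as [t [It [_ ct]]]; [simpl; tauto|].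
  destruct t as [t1 [t2 []]]. simpl in ct.
  pose proof (max_plus_one_ge f _ _ It) as Hm. simpl in Hm.
  destruct (G (t1, (t2, tt))) as [r Hr]. simpl in ct, Hr.
  assert (hd : dist2 (t1, t2) (x1, x2) < r).
  { destruct ct as [c1 [c2 _]]. pose proof (cond_pos r).
    apply dist2_lt_half; simpl; rewrite Rabs_minus_sym; lra. }
  destruct Hr as [[St Hr]|[nSt Hr]].
  - specialize (Hr _ Sx hd). apply Rabs_def2 in Hr. lra.
  - exfalso. exact (Hr _ hd Sx).
Qed.

(* If the supremum [m] were not attained, [1 / (m - f)] would be continuous and unbounded. *)
Lemma contR_attains_max S f :
  is_closed S -> within_unit_square S -> (forall p, S p -> contR_at_in S f p) ->
  (exists p, S p) -> exists c, S c /\ forall p, S p -> f p <= f c.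
Proof.
  intros cS bS cf [p0 Sp0].
  set (E := fun y => exists x, S x /\ y = f x).
  destruct (contR_bounded_above S f cS bS cf) as [M HM].
  assert (bE : bound E) by (exists M; intros y [x [Sx ->]]; auto).
  assert (nE : exists y, E y) by (exists (f p0); exists p0; auto).
  destruct (completeness E bE nE) as [m [ub lub]].
  assert (le : forall x, S x -> f x <= m) by (intros x Sx; apply ub; exists x; auto).
  destruct (classic (exists c, S c /\ f c = m)) as [[c [Sc Ec]]|H].
  { exists c; split; auto. intros q Sq. rewrite Ec; auto. }
  exfalso.
  assert (lt : forall x, S x -> f x < m).
  { intros x Sx. destruct (Rle_lt_or_eq_dec _ _ (le x Sx)); auto.
    exfalso. apply H; exists x; auto. }
  assert (cg : forall x, S x -> contR_at_in S (fun q => / (m + -1 * f q)) x).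
  { intros x Sx. apply contR_at_in_inv; [specialize (lt x Sx); lra|].
    apply contR_at_in_plus; [apply contR_at_in_const | apply contR_at_in_scal; auto]. }
  destruct (contR_bounded_above S _ cS bS cg) as [Mg HMg].
  assert (pos : 0 < Mg).
  { specialize (HMg p0 Sp0). specialize (lt p0 Sp0).
    assert (0 < / (m + -1 * f p0)) by (apply Rinv_0_lt_compat; lra). lra. }
  assert (ub2 : is_upper_bound E (m - / Mg)).
  { intros y [x [Sx ->]]. specialize (HMg x Sx). specialize (lt x Sx).
    assert (1 <= Mg * (m + -1 * f x)).
    { apply (Rmult_le_compat_r (m + -1 * f x)) in HMg; [|lra].
      rewrite Rinv_l in HMg; lra. }
    assert (/ Mg <= m + -1 * f x).
    { apply (Rmult_le_reg_l Mg); auto. rewrite Rinv_r; lra. }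
    lra. }
  specialize (lub _ ub2). assert (0 < / Mg) by (apply Rinv_0_lt_compat; auto). lra.
Qed.

Lemma second_derivative_nonpos_at_local_max (phi d : R -> R) x0 r e : 0 < r ->
  (forall s, Rabs (s - x0) < r -> phi s <= phi x0 /\ is_derive phi s (d s)) ->
  is_derive d x0 e -> e <= 0.
Proof.
  intros hr H de. apply Rnot_lt_le. intro he.
  apply is_derive_Reals in de. destruct (de (e / 2) ltac:(lra)) as [dl Hd].
  pose proof (cond_pos dl) as hdl. pose proof (Rmin_pos dl r hdl hr).
  pose proof (Rmin_l dl r); pose proof (Rmin_r dl r).
  set (h := Rmin dl r / 2) in *.
  assert (hh : 0 < h /\ h < dl /\ h < r) by (unfold h; lra). clearbody h.
  assert (der : forall c, Rabs (c - x0) <= h -> derivable_pt_lim phi c (d c)).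
  { intros c hc. apply is_derive_Reals. apply H. lra. }
  (* By the mean value theorem on the side where [d] moves away from 0,
     [phi] would exceed [phi x0]. *)
  destruct (Rle_or_lt 0 (d x0)) as [d0|d0].
  - destruct (MVT_cor2 phi d x0 (x0 + h)) as [c [Ec hc]]; [lra| |].
    { intros c hc. apply der. rewrite Rabs_right; lra. }
    assert (hcd : d c > 0).
    { specialize (Hd (c - x0) ltac:(lra) ltac:(rewrite Rabs_right; lra)).
      replace (x0 + (c - x0)) with c in Hd by ring. apply Rabs_def2 in Hd.
      assert ((d c - d x0) / (c - x0) * (c - x0) = d c - d x0) by (field; lra).
      assert (e / 2 * (c - x0) < (d c - d x0) / (c - x0) * (c - x0))
        by (apply Rmult_lt_compat_r; lra).
      nra. }
    destruct (H (x0 + h)) as [Hp _]; [rewrite Rabs_right; lra|]. nra.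
  - destruct (MVT_cor2 phi d (x0 - h) x0) as [c [Ec hc]]; [lra| |].
    { intros c hc. apply der. rewrite Rabs_left1; lra. }
    assert (hcd : d c < 0).
    { specialize (Hd (c - x0) ltac:(lra) ltac:(rewrite Rabs_left; lra)).
      replace (x0 + (c - x0)) with c in Hd by ring. apply Rabs_def2 in Hd.
      assert ((d c - d x0) / (c - x0) * (c - x0) = d c - d x0) by (field; lra).
      assert (0 < ((d c - d x0) / (c - x0) - e / 2) * (x0 - c))
        by (apply Rmult_lt_0_compat; lra).
      nra. }
    destruct (H (x0 - h)) as [Hp _]; [rewrite Rabs_left; lra|]. nra.
Qed.

Definition strictly_subharmonic_at (S : pt -> Prop) (F : pt -> R) (p : pt) : Prop :=
  exists r d1 d2 e1 e2, 0 < r /\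
    (forall s, Rabs (s - fst p) < r ->
       S (s, snd p) /\ is_derive (fun s => F (s, snd p)) s (d1 s)) /\
    (forall s, Rabs (s - snd p) < r ->
       S (fst p, s) /\ is_derive (fun s => F (fst p, s)) s (d2 s)) /\
    is_derive d1 (fst p) e1 /\ is_derive d2 (snd p) e2 /\ 0 < e1 + e2.

Definition harmonic_on_B (G : pt -> R) : Prop :=
  forall q, in_B q -> exists d1 d2 e1 e2,
    (forall s, in_B (s, snd q) -> is_derive (fun s => G (s, snd q)) s (d1 s)) /\
    (forall s, in_B (fst q, s) -> is_derive (fun s => G (fst q, s)) s (d2 s)) /\
    is_derive d1 (fst q) e1 /\ is_derive d2 (snd q) e2 /\ e1 + e2 = 0.

Lemma nonpos_of_strictly_subharmonic_where_pos (S : pt -> Prop) (F : pt -> R) :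
  is_closed S -> within_unit_square S ->
  (forall p, S p -> contR_at_in S F p) ->
  (forall p, S p -> F p <= 0 \/ strictly_subharmonic_at S F p) ->
  forall p, S p -> F p <= 0.
Proof.
  intros cS bS cF Hb p Sp.
  destruct (contR_attains_max S F cS bS cF (ex_intro _ p Sp)) as [[c1 c2] [Sc Hc]].
  destruct (Hb _ Sc) as [h|[r [d1 [d2 [e1 [e2 [hr [H1 [H2 [D1 [D2 He]]]]]]]]]]].
  { specialize (Hc p Sp). lra. }
  exfalso. simpl in *.
  assert (e1 <= 0).
  { apply (second_derivative_nonpos_at_local_max (fun s => F (s, c2)) d1 c1 r); auto.
    intros s hs. destruct (H1 s hs) as [Ss Ds]. split; auto. }
  assert (e2 <= 0).
  { apply (second_derivative_nonpos_at_local_max (fun s => F (c1, s)) d2 c2 r); auto.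
    intros s hs. destruct (H2 s hs) as [Ss Ds]. split; auto. }
  lra.
Qed.

Lemma is_derive_Rminus (f g : R -> R) x a b :
  is_derive f x a -> is_derive g x b -> is_derive (fun s => f s - g s) x (a - b).
Proof. apply (is_derive_minus f g x a b). Qed.

Lemma strictly_subharmonic_at_sub_harmonic S w G p :
  harmonic_on_B G -> strictly_subharmonic_at (fun q => S q /\ in_B q) w p ->
  strictly_subharmonic_at S (fun q => w q - G q) p.
Proof.
  intros hG [r [d1 [d2 [f1 [f2 [hr [H1 [H2 [D1 [D2 pos]]]]]]]]]].
  assert (iB : in_B p).
  { destruct (H1 (fst p)) as [[_ Bp] _]; [rewrite Rminus_diag, Rabs_R0; lra|].
    destruct p; exact Bp. }
  destruct (hG p iB) as [g1 [g2 [k1 [k2 [G1 [G2 [K1 [K2 Kz]]]]]]]].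
  exists r, (fun s => d1 s - g1 s), (fun s => d2 s - g2 s), (f1 - k1), (f2 - k2).
  split; [auto|]. split; [|split; [|split; [|split]]].
  - intros s hs. destruct (H1 s hs) as [[Ss Bs] Ds]. split; auto. apply is_derive_Rminus; auto.
  - intros s hs. destruct (H2 s hs) as [[Ss Bs] Ds]. split; auto. apply is_derive_Rminus; auto.
  - apply is_derive_Rminus; auto.
  - apply is_derive_Rminus; auto.
  - lra.
Qed.

Lemma le_harmonic_of_strictly_subharmonic (S : pt -> Prop) (G w : pt -> R) :
  is_closed S -> within_unit_square S -> (forall p, S p -> in_clB p) ->
  (forall p, in_clB p -> contR_at_in in_clB G p) -> (forall p, S p -> contR_at_in S w p) ->
  harmonic_on_B G ->
  (forall p, S p -> w p <= G p \/ strictly_subharmonic_at (fun q => S q /\ in_B q) w p) ->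
  forall p, S p -> w p <= G p.
Proof.
  intros cS bS SC cG cw hG Hb p Sp.
  enough (w p - G p <= 0) by lra.
  apply (nonpos_of_strictly_subharmonic_where_pos S (fun q => w q - G q)); auto.
  - intros q Sq. apply (contR_at_in_ext S (fun q => w q + -1 * G q)); [intro; ring|].
    apply contR_at_in_plus; auto.
    apply contR_at_in_scal, (contR_at_in_subset S in_clB); auto.
  - intros q Sq. destruct (Hb q Sq) as [h|h]; [left; lra|].
    right. apply strictly_subharmonic_at_sub_harmonic; auto.
Qed.

(** * Functions of class C^1 up to the circle *)

Definition C1_on_clB (f fx fy : pt -> R) : Prop :=
  (forall q, in_B q -> is_derive (fun s => f (s, snd q)) (fst q) (fx q) /\
                      is_derive (fun s => f (fst q, s)) (snd q) (fy q)) /\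
  (forall q, in_clB q ->
     contR_at_in in_clB f q /\ contR_at_in in_clB fx q /\ contR_at_in in_clB fy q).

Lemma in_B_in_clB q : in_B q -> in_clB q.
Proof. unfold in_B, in_clB. lra. Qed.

Lemma Rabs_le_bounds x a : Rabs x <= a -> - a <= x <= a.
Proof. unfold Rabs; destruct Rcase_abs; lra. Qed.

Lemma Rabs_mult_le a b k : Rabs a <= k -> Rabs (a * b) <= k * Rabs b.
Proof. intros. rewrite Rabs_mult. apply Rmult_le_compat_r; auto. apply Rabs_pos. Qed.

Lemma cos_sq_add_sin_sq x : cos x ^ 2 + sin x ^ 2 = 1.
Proof. pose proof (sin2_cos2 x). unfold Rsqr in H. nra. Qed.

Lemma on_circle_cos_sin s : on_circle (cos s, sin s).
Proof. apply cos_sq_add_sin_sq. Qed.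

Definition clamp (a b s : R) : R := Rmax a (Rmin b s).

Lemma clamp_bounds a b s : a <= b -> a <= clamp a b s <= b.
Proof. unfold clamp, Rmax, Rmin; intros; repeat destruct Rle_dec; lra. Qed.

Lemma clamp_id a b s : a <= s <= b -> clamp a b s = s.
Proof. unfold clamp, Rmax, Rmin; intros; repeat destruct Rle_dec; lra. Qed.

Lemma clamp_dist_le a b s x : a <= x <= b -> Rabs (clamp a b s - x) <= Rabs (s - x).
Proof.
  unfold clamp, Rmax, Rmin; intros.
  repeat destruct Rle_dec; unfold Rabs; repeat destruct Rcase_abs; lra.
Qed.

Lemma ball_R_iff (x y e : R) : ball x e y <-> Rabs (y - x) < e.
Proof. unfold ball; simpl; unfold AbsRing_ball, abs, minus, plus, opp; simpl. tauto. Qed.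

(* The mean value theorem with continuity only relative to [a, b]; it is reduced to
   [MVT_gen] by precomposing with the clamp onto [a, b]. *)
Lemma MVT_rel_continuous (phi dphi : R -> R) a b : a < b ->
  (forall x, a < x < b -> is_derive phi x (dphi x)) ->
  (forall x, a <= x <= b -> forall e, 0 < e -> exists d, 0 < d /\
       forall y, a <= y <= b -> Rabs (y - x) < d -> Rabs (phi y - phi x) < e) ->
  exists c, a <= c <= b /\ phi b - phi a = dphi c * (b - a).
Proof.
  intros hab D C.
  destruct (MVT_gen (fun s => phi (clamp a b s)) a b dphi) as [c [hc Ec]].
  - rewrite Rmin_left, Rmax_right by lra. intros x hx.
    apply (is_derive_ext_loc phi). 2: apply D; auto.
    assert (hp : 0 < Rmin (x - a) (b - x)) by (apply Rmin_pos; lra).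
    exists (mkposreal _ hp). intros y hy0.
    assert (hy : Rabs (y - x) < Rmin (x - a) (b - x)) by (apply ball_R_iff; exact hy0).
    pose proof (Rmin_l (x - a) (b - x)). pose proof (Rmin_r (x - a) (b - x)).
    apply Rabs_def2 in hy. rewrite clamp_id; auto. lra.
  - rewrite Rmin_left, Rmax_right by lra. intros x hx.
    unfold continuity_pt, continue_in, limit1_in, limit_in. simpl. unfold R_dist.
    intros e he. destruct (C x hx e he) as [d [hd Hd]]. exists d; split; auto.
    intros y [_ hy]. rewrite (clamp_id a b x) by lra.
    apply Hd; [apply clamp_bounds; lra|].
    eapply Rle_lt_trans; [apply clamp_dist_le; lra | auto].
  - rewrite Rmin_left, Rmax_right in hc by lra. exists c; split; auto.
    rewrite !clamp_id in Ec by lra. auto.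
Qed.

Lemma MVT_between (g dg : R -> R) (In Out : R -> Prop) a b : In a -> In b ->
  (forall s, Rmin a b < s < Rmax a b -> Out s) -> (forall s, Out s -> In s) ->
  (forall s, Out s -> is_derive g s (dg s)) ->
  (forall x, In x -> forall e, 0 < e -> exists d, 0 < d /\
       forall y, In y -> Rabs (y - x) < d -> Rabs (g y - g x) < e) ->
  exists xi, Rmin a b <= xi <= Rmax a b /\ In xi /\ g b - g a = dg xi * (b - a).
Proof.
  intros Ia Ib Hout OI D C.
  assert (InI : forall s, Rmin a b <= s <= Rmax a b -> In s).
  { intros s hs. destruct (Req_dec s a) as [->|]; auto. destruct (Req_dec s b) as [->|]; auto.
    apply OI, Hout. unfold Rmin, Rmax in *; destruct Rle_dec; lra. }
  assert (MVT : forall a b, a < b -> Rmin a b = a -> Rmax a b = b ->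
            (forall s, Rmin a b <= s <= Rmax a b -> In s) ->
            (forall s, Rmin a b < s < Rmax a b -> Out s) ->
            exists c, a <= c <= b /\ In c /\ g b - g a = dg c * (b - a)).
  { clear - D C OI. intros a b hab Ea Eb InI Hout.
    rewrite Ea, Eb in InI, Hout.
    destruct (MVT_rel_continuous g dg a b hab) as [c [hc Ec]]; eauto.
    intros x hx e he. destruct (C x (InI x hx) e he) as [d [hd Hd]].
    exists d; split; auto. }
  destruct (Rtotal_order a b) as [h|[h|h]].
  - rewrite Rmin_left, Rmax_right in * by lra. apply MVT; auto.
    + apply Rmin_left; lra. + apply Rmax_right; lra.
    + rewrite Rmin_left, Rmax_right; auto; lra.
    + rewrite Rmin_left, Rmax_right; auto; lra.
  - subst. exists b. rewrite Rmin_left, Rmax_left by lra. repeat split; auto; lra.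
  - rewrite Rmin_right, Rmax_left in * by lra.
    destruct (MVT b a h) as [c [hc [Ic Ec]]].
    + apply Rmin_left; lra. + apply Rmax_right; lra.
    + rewrite Rmin_left, Rmax_right; auto; lra.
    + rewrite Rmin_left, Rmax_right; auto; lra.
    + exists c. repeat split; auto; lra.
Qed.

Lemma C1_on_clB_MVT_horizontal f fx fy y a b : C1_on_clB f fx fy ->
  in_clB (a, y) -> in_clB (b, y) -> (forall s, Rmin a b < s < Rmax a b -> in_B (s, y)) ->
  exists xi, Rmin a b <= xi <= Rmax a b /\ in_clB (xi, y) /\
             f (b, y) - f (a, y) = fx (xi, y) * (b - a).
Proof.
  intros [D C] Ia Ib Ho.
  apply (MVT_between (fun s => f (s, y)) (fun s => fx (s, y))
           (fun s => in_clB (s, y)) (fun s => in_B (s, y))); auto.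
  - intros s hs. apply in_B_in_clB; auto.
  - intros s hs. apply (D (s, y) hs).
  - intros x hx e he. destruct (C _ hx) as [Cf _]. destruct (Cf e he) as [d [hd Hd]].
    exists d; split; auto. intros z hz hzd. apply Hd; auto.
    pose proof (dist2_le_Rabs (x, y) (z, y)) as H. simpl in H.
    rewrite Rminus_diag, Rabs_R0, Rabs_minus_sym in H. lra.
Qed.

Lemma C1_on_clB_MVT_vertical f fx fy x a b : C1_on_clB f fx fy ->
  in_clB (x, a) -> in_clB (x, b) -> (forall s, Rmin a b < s < Rmax a b -> in_B (x, s)) ->
  exists xi, Rmin a b <= xi <= Rmax a b /\ in_clB (x, xi) /\
             f (x, b) - f (x, a) = fy (x, xi) * (b - a).
Proof.
  intros [D C] Ia Ib Ho.
  apply (MVT_between (fun s => f (x, s)) (fun s => fy (x, s))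
           (fun s => in_clB (x, s)) (fun s => in_B (x, s))); auto.
  - intros s hs. apply in_B_in_clB; auto.
  - intros s hs. apply (D (x, s) hs).
  - intros z hz e he. destruct (C _ hz) as [Cf _]. destruct (Cf e he) as [d [hd Hd]].
    exists d; split; auto. intros w hw hwd. apply Hd; auto.
    pose proof (dist2_le_Rabs (x, z) (x, w)) as H. simpl in H.
    rewrite Rminus_diag, Rabs_R0, Rabs_minus_sym in H. lra.
Qed.

Lemma Rabs_between_lt a b c x d : Rmin a b <= x <= Rmax a b ->
  Rabs (a - c) < d -> Rabs (b - c) < d -> Rabs (x - c) < d.
Proof.
  unfold Rmin, Rmax; intros. destruct Rle_dec; unfold Rabs in *; repeat destruct Rcase_abs; lra.
Qed.

(* Differentiability at [p] uniformly up to the boundary, along an L-shaped path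
   (horizontal from [a] then vertical to [b]) whose interior lies in the open disk. *)
Lemma C1_on_clB_linear_approx f fx fy p e : C1_on_clB f fx fy -> in_clB p -> 0 < e ->
  exists d, 0 < d /\ forall a1 a2 b1 b2,
    in_clB (a1, a2) -> in_clB (b1, a2) -> in_clB (b1, b2) ->
    (forall s, Rmin a1 b1 < s < Rmax a1 b1 -> in_B (s, a2)) ->
    (forall s, Rmin a2 b2 < s < Rmax a2 b2 -> in_B (b1, s)) ->
    Rabs (a1 - fst p) < d -> Rabs (a2 - snd p) < d ->
    Rabs (b1 - fst p) < d -> Rabs (b2 - snd p) < d ->
    Rabs (f (b1, b2) - f (a1, a2) - (b1 - a1) * fx p - (b2 - a2) * fy p)
      <= e * (Rabs (b1 - a1) + Rabs (b2 - a2)).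
Proof.
  intros R Cp he. pose proof R as [_ C].
  destruct (C p Cp) as [_ [Cx Cy]].
  destruct (Cx e he) as [d1 [hd1 H1]]. destruct (Cy e he) as [d2 [hd2 H2]].
  pose proof (Rmin_pos d1 d2 hd1 hd2). pose proof (Rmin_l d1 d2); pose proof (Rmin_r d1 d2).
  exists (Rmin d1 d2 / 2). split; [lra|].
  intros a1 a2 b1 b2 A C1 B L1 L2 ha1 ha2 hb1 hb2.
  destruct (C1_on_clB_MVT_horizontal f fx fy a2 a1 b1 R A C1 L1) as [xi [hxi [Cxi Exi]]].
  destruct (C1_on_clB_MVT_vertical f fx fy b1 a2 b2 R C1 B L2) as [ze [hze [Cze Eze]]].
  assert (k1 : Rabs (fx (xi, a2) - fx p) < e).
  { apply H1; auto. eapply Rle_lt_trans; [apply dist2_le_Rabs|]. simpl.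
    pose proof (Rabs_between_lt a1 b1 (fst p) xi _ hxi ha1 hb1).
    rewrite (Rabs_minus_sym (fst p)), (Rabs_minus_sym (snd p)). lra. }
  assert (k2 : Rabs (fy (b1, ze) - fy p) < e).
  { apply H2; auto. eapply Rle_lt_trans; [apply dist2_le_Rabs|]. simpl.
    pose proof (Rabs_between_lt a2 b2 (snd p) ze _ hze ha2 hb2).
    rewrite (Rabs_minus_sym (fst p)), (Rabs_minus_sym (snd p)). lra. }
  replace (f (b1, b2) - f (a1, a2) - (b1 - a1) * fx p - (b2 - a2) * fy p) with
     ((b1 - a1) * (fx (xi, a2) - fx p) + (b2 - a2) * (fy (b1, ze) - fy p)).
  2:{ replace (f (b1, b2) - f (a1, a2))
        with ((f (b1, b2) - f (b1, a2)) + (f (b1, a2) - f (a1, a2))) by ring.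
      rewrite Exi, Eze. ring. }
  eapply Rle_trans; [apply Rabs_triang|]. rewrite !Rabs_mult.
  pose proof (Rabs_pos (b1 - a1)). pose proof (Rabs_pos (b2 - a2)).
  assert (Rabs (b1 - a1) * Rabs (fx (xi, a2) - fx p) <= Rabs (b1 - a1) * e)
    by (apply Rmult_le_compat_l; lra).
  assert (Rabs (b2 - a2) * Rabs (fy (b1, ze) - fy p) <= Rabs (b2 - a2) * e)
    by (apply Rmult_le_compat_l; lra).
  lra.
Qed.

Lemma sq_lt_between_scaled r a s : 0 <= r <= 1 ->
  Rmin (r * a) a < s < Rmax (r * a) a -> s ^ 2 < a ^ 2.
Proof.
  intros hr hs. unfold Rmin, Rmax in hs; destruct Rle_dec;
  (destruct (Rle_or_lt 0 a); [assert (0 <= r * a) by nra | assert (r * a <= 0) by nra]); nra.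
Qed.

Lemma sq_lt_between a b s : Rmin a b < s < Rmax a b -> b ^ 2 <= a ^ 2 -> s ^ 2 < a ^ 2.
Proof.
  intros hs hb. unfold Rmin, Rmax in hs; destruct Rle_dec;
  destruct (Rle_or_lt 0 a); destruct (Rle_or_lt 0 b); destruct (Rle_or_lt 0 s); nra.
Qed.

Lemma eq0_of_Rabs_le_eps x K : 0 <= K -> (forall e, 0 < e <= 1 -> Rabs x <= K * e) -> x = 0.
Proof.
  intros hK H. destruct (Req_dec x 0) as [|n]; auto. exfalso.
  assert (ha : 0 < Rabs x) by (apply Rabs_pos_lt; auto).
  set (e := Rmin 1 (Rabs x / (2 * (K + 1)))).
  assert (he : 0 < e) by (apply Rmin_pos; [lra | apply Rdiv_lt_0_compat; lra]).
  assert (e <= 1) by apply Rmin_l. assert (e <= Rabs x / (2 * (K + 1))) by apply Rmin_r.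
  specialize (H e (conj he H0)).
  assert (K * e <= (K + 1) * (Rabs x / (2 * (K + 1)))) by (apply Rmult_le_compat; lra).
  assert ((K + 1) * (Rabs x / (2 * (K + 1))) = Rabs x / 2) by (field; lra). lra.
Qed.

Lemma C1_on_clB_radial_approx f fx fy p1 p2 e :
  C1_on_clB f fx fy -> on_circle (p1, p2) -> 0 < e ->
  exists r0, 0 < r0 < 1 /\ forall r, r0 < r < 1 ->
    Rabs (f (p1, p2) - f (r * p1, r * p2) - (1 - r) * (p1 * fx (p1, p2) + p2 * fy (p1, p2)))
      <= 2 * e * (1 - r).
Proof.
  intros R oc he. unfold on_circle in oc; simpl in oc.
  destruct (C1_on_clB_linear_approx f fx fy (p1, p2) e R ltac:(unfold in_clB; simpl; lra) he)
    as [d [hd H]].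
  pose proof (Rmax_l (1 / 2) (1 - d / 2)). pose proof (Rmax_r (1 / 2) (1 - d / 2)).
  exists (Rmax (1 / 2) (1 - d / 2)). split; [split; [lra | apply Rmax_lub_lt; lra]|].
  intros r [hr1 hr2].
  assert (b1 : Rabs p1 <= 1) by (apply Rabs_le; nra).
  assert (b2 : Rabs p2 <= 1) by (apply Rabs_le; nra).
  assert (E1 : Rabs (p1 - r * p1) = (1 - r) * Rabs p1).
  { replace (p1 - r * p1) with ((1 - r) * p1) by ring. rewrite Rabs_mult, Rabs_right; lra. }
  assert (E2 : Rabs (p2 - r * p2) = (1 - r) * Rabs p2).
  { replace (p2 - r * p2) with ((1 - r) * p2) by ring. rewrite Rabs_mult, Rabs_right; lra. }
  assert (hrr : 0 <= 1 - r ^ 2) by nra.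
  assert (0 <= p1 ^ 2 * (1 - r ^ 2)) by (apply Rmult_le_pos; nra).
  assert (0 <= p2 ^ 2 * (1 - r ^ 2)) by (apply Rmult_le_pos; nra).
  specialize (H (r * p1) (r * p2) p1 p2). simpl in H.
  replace (f (p1, p2) - f (r * p1, r * p2) - (1 - r) * (p1 * fx (p1, p2) + p2 * fy (p1, p2)))
    with (f (p1, p2) - f (r * p1, r * p2) - (p1 - r * p1) * fx (p1, p2)
          - (p2 - r * p2) * fy (p1, p2)) by ring.
  eapply Rle_trans; [apply H|].
  - unfold in_clB; simpl. nra.
  - unfold in_clB; simpl. nra.
  - unfold in_clB; simpl. nra.
  - intros s hs. unfold in_B; simpl. pose proof (sq_lt_between_scaled r p1 s ltac:(lra) hs). nra.
  - intros s hs. unfold in_B; simpl. pose proof (sq_lt_between_scaled r p2 s ltac:(lra) hs). nra.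
  - rewrite Rabs_minus_sym, E1. nra.
  - rewrite Rabs_minus_sym, E2. nra.
  - rewrite Rminus_diag, Rabs_R0. lra.
  - rewrite Rminus_diag, Rabs_R0. lra.
  - rewrite E1, E2.
    assert ((1 - r) * Rabs p1 <= (1 - r) * 1) by (apply Rmult_le_compat_l; lra).
    assert ((1 - r) * Rabs p2 <= (1 - r) * 1) by (apply Rmult_le_compat_l; lra).
    assert (e * ((1 - r) * Rabs p1 + (1 - r) * Rabs p2) <= e * (2 * (1 - r)))
      by (apply Rmult_le_compat_l; lra).
    lra.
Qed.

Lemma C1_on_clB_circle_approx f fx fy p e : C1_on_clB f fx fy -> on_circle p -> 0 < e ->
  exists d, 0 < d /\ forall q, on_circle q ->
    Rabs (fst q - fst p) < d -> Rabs (snd q - snd p) < d ->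
    Rabs (f q - f p - (fst q - fst p) * fx p - (snd q - snd p) * fy p)
      <= e * (Rabs (fst q - fst p) + Rabs (snd q - snd p)).
Proof.
  destruct p as [c0 s0]. intros R hp he. unfold on_circle in hp; simpl in *.
  assert (cp : in_clB (c0, s0)) by (unfold in_clB; simpl; lra).
  destruct (C1_on_clB_linear_approx f fx fy (c0, s0) e R cp he) as [d [hd H]].
  exists d; split; auto. intros [c1 s1] hq h1 h2. unfold on_circle in hq; simpl in *.
  (* Walk from the point with the larger first coordinate (in absolute value),
     so that the L-shaped path stays inside the disk. *)
  destruct (Rle_or_lt (c1 ^ 2) (c0 ^ 2)) as [cc|cc].
  - apply H; unfold in_clB, in_B; simpl; try lra.
    + intros s hs. pose proof (sq_lt_between c0 c1 s hs cc). lra.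
    + intros s hs. rewrite Rmin_comm, Rmax_comm in hs.
      pose proof (sq_lt_between s1 s0 s hs ltac:(lra)). lra.
    + rewrite Rminus_diag, Rabs_R0; lra.
    + rewrite Rminus_diag, Rabs_R0; lra.
  - assert (Hs : Rabs (f (c0, s0) - f (c1, s1) - (c0 - c1) * fx (c0, s0) - (s0 - s1) * fy (c0, s0))
                 <= e * (Rabs (c0 - c1) + Rabs (s0 - s1))).
    { apply H; unfold in_clB, in_B; simpl; try lra.
      + intros s hs. pose proof (sq_lt_between c1 c0 s hs ltac:(lra)). lra.
      + intros s hs. rewrite Rmin_comm, Rmax_comm in hs.
        pose proof (sq_lt_between s0 s1 s hs ltac:(lra)). lra.
      + rewrite Rminus_diag, Rabs_R0; lra.
      + rewrite Rminus_diag, Rabs_R0; lra. }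
    rewrite (Rabs_minus_sym c0 c1), (Rabs_minus_sym s0 s1) in Hs.
    replace (f (c0, s0) - f (c1, s1) - (c0 - c1) * fx (c0, s0) - (s0 - s1) * fy (c0, s0)) with
      (- (f (c1, s1) - f (c0, s0) - (c1 - c0) * fx (c0, s0) - (s1 - s0) * fy (c0, s0))) in Hs
      by ring.
    rewrite Rabs_Ropp in Hs. exact Hs.
Qed.

Lemma deriv_remainder_le f t l e : is_derive f t l -> 0 < e ->
  exists d, 0 < d /\ forall u, Rabs u < d -> Rabs (f (t + u) - f t - u * l) <= e * Rabs u.
Proof.
  intros D he. apply is_derive_Reals in D. destruct (D e he) as [d Hd].
  exists d; split; [apply cond_pos|]. intros u hu.
  destruct (Req_dec u 0) as [->|nz].
  - rewrite Rplus_0_r. replace (f t - f t - 0 * l) with 0 by ring. rewrite Rabs_R0. lra.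
  - specialize (Hd u nz hu).
    replace (f (t + u) - f t - u * l) with (u * ((f (t + u) - f t) / u - l)) by (field; auto).
    rewrite Rabs_mult, Rmult_comm. apply Rmult_le_compat_r; [apply Rabs_pos | lra].
Qed.

Lemma cos_sin_increment_le t e : 0 < e <= 1 -> exists d, 0 < d /\ forall h, 0 < h < d ->
  Rabs (cos (t + h) - cos t + sin t * h) <= e * h /\
  Rabs (sin (t + h) - sin t - cos t * h) <= e * h /\
  Rabs (cos (t + h) - cos t) <= 2 * h /\ Rabs (sin (t + h) - sin t) <= 2 * h.
Proof.
  intros [he he1].
  destruct (deriv_remainder_le cos t _ e (is_derive_cos t) he) as [dc [hdc Hc]].
  destruct (deriv_remainder_le sin t _ e (is_derive_sin t) he) as [ds [hds Hs]].
  exists (Rmin dc ds). split; [apply Rmin_pos; auto|].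
  intros h [hh hd]. pose proof (Rmin_l dc ds); pose proof (Rmin_r dc ds).
  assert (Eh : Rabs h = h) by (apply Rabs_right; lra).
  specialize (Hc h ltac:(lra)). specialize (Hs h ltac:(lra)). rewrite Eh in Hc, Hs.
  replace (cos (t + h) - cos t - h * - sin t) with (cos (t + h) - cos t + sin t * h) in Hc
    by ring.
  replace (sin (t + h) - sin t - h * cos t) with (sin (t + h) - sin t - cos t * h) in Hs
    by ring.
  pose proof (SIN_bound t); pose proof (COS_bound t).
  pose proof (Rabs_le_bounds _ _ Hc). pose proof (Rabs_le_bounds _ _ Hs).
  repeat split; auto; apply Rabs_le; nra.
Qed.

(* The chain rule for [s |-> f (cos s, sin s)], with [f] only C^1 up to the circle. *)
Lemma C1_on_clB_derive_along_circle f fx fy t l : C1_on_clB f fx fy ->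
  is_derive (fun s => f (cos s, sin s)) t l ->
  l = - sin t * fx (cos t, sin t) + cos t * fy (cos t, sin t).
Proof.
  intros R D.
  set (c0 := cos t). set (s0 := sin t). set (X := fx (c0, s0)). set (Y := fy (c0, s0)).
  apply Rminus_diag_uniq.
  pose proof (Rabs_pos X); pose proof (Rabs_pos Y).
  apply (eq0_of_Rabs_le_eps _ (5 + Rabs X + Rabs Y)); [lra|].
  intros e he.
  destruct (C1_on_clB_circle_approx f fx fy (c0, s0) e R (on_circle_cos_sin t) ltac:(lra))
    as [d [hd Happ]]. simpl in Happ.
  destruct (deriv_remainder_le _ t l e D ltac:(lra)) as [dF [hdF HF]].
  destruct (cos_sin_increment_le t e he) as [dcs [hdcs Hcs]].
  set (h := Rmin (Rmin dF dcs) (d / 4) / 2).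
  assert (hh : 0 < h /\ h < dF /\ h < dcs /\ h < d / 4).
  { unfold h. pose proof (Rmin_pos dF dcs hdF hdcs).
    pose proof (Rmin_pos (Rmin dF dcs) (d / 4) ltac:(lra) ltac:(lra)).
    pose proof (Rmin_l (Rmin dF dcs) (d / 4)). pose proof (Rmin_r (Rmin dF dcs) (d / 4)).
    pose proof (Rmin_l dF dcs). pose proof (Rmin_r dF dcs). lra. }
  clearbody h. destruct hh as [hh [h1 [h2 h3]]].
  assert (Eh : Rabs h = h) by (apply Rabs_right; lra).
  specialize (HF h ltac:(lra)). rewrite Eh in HF.
  replace (h * l) with (l * h) in HF by ring.
  destruct (Hcs h (conj hh h2)) as [Ec [Es [dc1 ds1]]]. fold c0 s0 in HF, Ec, Es, dc1, ds1.
  set (c1 := cos (t + h)) in *. set (s1 := sin (t + h)) in *.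
  assert (Main : Rabs (f (c1, s1) - f (c0, s0) - (c1 - c0) * X - (s1 - s0) * Y)
                 <= e * (Rabs (c1 - c0) + Rabs (s1 - s0)))
    by (apply (Happ (c1, s1)); [apply on_circle_cos_sin | simpl; lra ..]).
  assert (T1 : Rabs ((c1 - c0 + s0 * h) * X) <= e * h * Rabs X) by (apply Rabs_mult_le; auto).
  assert (T2 : Rabs ((s1 - s0 - c0 * h) * Y) <= e * h * Rabs Y) by (apply Rabs_mult_le; auto).
  assert (Eq : (l - (- s0 * X + c0 * Y)) * h =
     - (f (c1, s1) - f (c0, s0) - l * h)
     + (f (c1, s1) - f (c0, s0) - (c1 - c0) * X - (s1 - s0) * Y)
     + (c1 - c0 + s0 * h) * X + (s1 - s0 - c0 * h) * Y) by ring.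
  assert (Bd : Rabs ((l - (- s0 * X + c0 * Y)) * h) <= e * h * (5 + Rabs X + Rabs Y)).
  { rewrite Eq.
    eapply Rle_trans; [apply Rabs_triang|].
    eapply Rle_trans; [apply Rplus_le_compat_r, Rabs_triang|].
    eapply Rle_trans; [apply Rplus_le_compat_r, Rplus_le_compat_r, Rabs_triang|].
    rewrite Rabs_Ropp.
    assert (e * (Rabs (c1 - c0) + Rabs (s1 - s0)) <= e * (4 * h))
      by (apply Rmult_le_compat_l; lra).
    lra. }
  rewrite Rabs_mult, (Rabs_right h) in Bd by lra.
  apply (Rmult_le_reg_r h); auto. lra.
Qed.

(** * Supporting lines of the convex hull *)

Lemma co_convex D : is_convex (co D).
Proof. intros p q t Hp Hq ht C cC sub. apply cC; auto; [apply Hp | apply Hq]; auto. Qed.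

Lemma subset_co D q : D q -> co D q.
Proof. intros Dq C cC sub. auto. Qed.

Lemma sum_sq_pos (a b : R) : (a, b) <> (0, 0) -> 0 < a ^ 2 + b ^ 2.
Proof.
  intros nz. destruct (Req_dec a 0) as [->|ha].
  - destruct (Req_dec b 0) as [->|hb]; [congruence|].
    pose proof (pow2_gt_0 b hb). nra.
  - pose proof (pow2_gt_0 a ha). pose proof (pow2_ge_0 b). lra.
Qed.

Lemma sqrt_sum_sq_lin_comb_le a b u1 u2 v1 v2 :
  sqrt ((a * u1 + b * v1) ^ 2 + (a * u2 + b * v2) ^ 2)
    <= Rabs a * sqrt (u1 ^ 2 + u2 ^ 2) + Rabs b * sqrt (v1 ^ 2 + v2 ^ 2).
Proof. rewrite <- !sqrt_sum_sq_scal. apply sqrt_sum_sq_triang. Qed.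

Lemma convex_ball_toward_closure (C : pt -> Prop) c a rho lam :
  is_convex C -> 0 < rho -> 0 < lam <= 1 ->
  (forall x, dist2 c x < rho -> C x) -> closure C a ->
  forall x, dist2 (fst a + lam * (fst c - fst a), snd a + lam * (snd c - snd a)) x
              < lam * rho / 2 -> C x.
Proof.
  intros cC hr hl Bc cl [x1 x2] hx.
  destruct (cl (lam * rho / 2) ltac:(nra)) as [[a1' a2'] [Ca' ha']].
  destruct a as [a1 a2]. destruct c as [c1 c2]. cbn [fst snd] in *.
  set (m1 := a1 + lam * (c1 - a1)) in *. set (m2 := a2 + lam * (c2 - a2)) in *.
  (* [x] is a convex combination of a point [d] of the big ball and of [a'] in [C]. *)
  set (d1 := a1' + (x1 - a1') / lam). set (d2 := a2' + (x2 - a2') / lam).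
  assert (Cd : C (d1, d2)).
  { apply Bc. unfold dist2; cbn [fst snd].
    replace (c1 - d1) with (/ lam * (m1 - x1) + ((lam - 1) / lam) * (a1 - a1'))
      by (unfold d1, m1; field; lra).
    replace (c2 - d2) with (/ lam * (m2 - x2) + ((lam - 1) / lam) * (a2 - a2'))
      by (unfold d2, m2; field; lra).
    eapply Rle_lt_trans; [apply sqrt_sum_sq_lin_comb_le|].
    unfold dist2 in hx, ha'. cbn [fst snd] in hx, ha'.
    rewrite Rabs_right by (apply Rle_ge, Rlt_le, Rinv_0_lt_compat; lra).
    rewrite Rabs_left1 by (apply Rmult_le_0_r; [lra | apply Rlt_le, Rinv_0_lt_compat; lra]).
    set (A := sqrt ((m1 - x1) ^ 2 + (m2 - x2) ^ 2)) in *.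
    set (B := sqrt ((a1 - a1') ^ 2 + (a2 - a2') ^ 2)) in *.
    assert (0 <= B) by apply sqrt_pos.
    replace (/ lam * A + - ((lam - 1) / lam) * B) with ((A + (1 - lam) * B) / lam)
      by (field; lra).
    apply (Rmult_lt_reg_r lam); [lra|].
    unfold Rdiv. rewrite Rmult_assoc, Rinv_l, Rmult_1_r by lra.
    assert ((1 - lam) * B <= (1 - lam) * (lam * rho / 2)) by (apply Rmult_le_compat_l; lra).
    assert (0 <= lam * (lam * rho / 2)) by (apply Rmult_le_pos; nra).
    nra. }
  pose proof (cC (d1, d2) (a1', a2') lam Cd Ca' ltac:(lra)) as H. cbn [fst snd] in H.
  replace (lam * d1 + (1 - lam) * a1') with x1 in H by (unfold d1; field; lra).
  replace (lam * d2 + (1 - lam) * a2') with x2 in H by (unfold d2; field; lra). auto.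
Qed.

Lemma curve_chord_remainder (g1 g2 : R -> R) t t1 t2 mu eps :
  is_derive g1 t t1 -> is_derive g2 t t2 -> 0 < eps ->
  exists h, 0 < h <= 1 /\
    Rabs (g1 (t - h * mu) - g1 t + h * mu * t1) <= eps * (h * Rabs mu) /\
    Rabs (g2 (t - h * mu) - g2 t + h * mu * t2) <= eps * (h * Rabs mu).
Proof.
  intros D1 D2 heps.
  destruct (deriv_remainder_le g1 t t1 eps D1 heps) as [dl1 [hdl1 H1]].
  destruct (deriv_remainder_le g2 t t2 eps D2 heps) as [dl2 [hdl2 H2]].
  pose proof (Rmin_pos dl1 dl2 hdl1 hdl2). pose proof (Rmin_l dl1 dl2); pose proof (Rmin_r dl1 dl2).
  pose proof (Rabs_pos mu).
  set (h := Rmin 1 (Rmin dl1 dl2 / (2 * (Rabs mu + 1)))).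
  assert (hh : 0 < h) by (unfold h; apply Rmin_pos; [lra | apply Rdiv_lt_0_compat; lra]).
  assert (hh1 : h <= 1) by apply Rmin_l.
  assert (hh2 : h * (2 * (Rabs mu + 1)) <= Rmin dl1 dl2).
  { assert (hr : h <= Rmin dl1 dl2 / (2 * (Rabs mu + 1))) by apply Rmin_r.
    apply (Rmult_le_compat_r (2 * (Rabs mu + 1))) in hr; [|lra].
    replace (Rmin dl1 dl2 / (2 * (Rabs mu + 1)) * (2 * (Rabs mu + 1))) with (Rmin dl1 dl2)
      in hr by (field; lra). exact hr. }
  clearbody h. exists h. split; [lra|].
  assert (hu : Rabs (- (h * mu)) = h * Rabs mu) by (rewrite Rabs_Ropp, Rabs_mult, Rabs_right; lra).
  assert (Rabs (- (h * mu)) < Rmin dl1 dl2) by (rewrite hu; nra).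
  specialize (H1 (- (h * mu)) ltac:(lra)). specialize (H2 (- (h * mu)) ltac:(lra)).
  rewrite hu in H1, H2.
  replace (t + - (h * mu)) with (t - h * mu) in H1, H2 by ring.
  replace (g1 (t - h * mu) - g1 t - - (h * mu) * t1) with (g1 (t - h * mu) - g1 t + h * mu * t1)
    in H1 by ring.
  replace (g2 (t - h * mu) - g2 t - - (h * mu) * t2) with (g2 (t - h * mu) - g2 t + h * mu * t2)
    in H2 by ring.
  auto.
Qed.

(* The segments from the curve points [g (t - h mu)] to the centre of the ball sweep a
   neighbourhood of [g t]. *)
Lemma interior_of_ball_on_tangent (C : pt -> Prop) (g1 g2 : R -> R) t t1 t2 mu rho :
  is_convex C -> 0 < rho -> is_derive g1 t t1 -> is_derive g2 t t2 ->
  (forall s, closure C (g1 s, g2 s)) ->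
  (forall x, dist2 (g1 t + mu * t1, g2 t + mu * t2) x < rho -> C x) ->
  Defs.interior C (g1 t, g2 t).
Proof.
  intros cC hrho D1 D2 clg Bm.
  set (eps := rho / (8 * (Rabs mu + 1))). pose proof (Rabs_pos mu).
  assert (heps : 0 < eps) by (unfold eps; apply Rdiv_lt_0_compat; lra).
  destruct (curve_chord_remainder g1 g2 t t1 t2 mu eps D1 D2 heps) as [h [hh [H1 H2]]].
  set (lam := h / (1 + h)).
  assert (hlam : 0 < lam <= 1).
  { unfold lam. split; [apply Rdiv_lt_0_compat; lra|].
    apply (Rmult_le_reg_r (1 + h)); [lra|]. unfold Rdiv. rewrite Rmult_assoc, Rinv_l; lra. }
  pose proof (convex_ball_toward_closure C _ _ rho lam cC hrho hlam Bm (clg (t - h * mu))) as Bw.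
  cbn [fst snd] in Bw.
  set (z1 := g1 t) in *. set (z2 := g2 t) in *.
  set (e1 := g1 (t - h * mu) - z1 + h * mu * t1) in *.
  set (e2 := g2 (t - h * mu) - z2 + h * mu * t2) in *.
  set (w1 := g1 (t - h * mu) + lam * (z1 + mu * t1 - g1 (t - h * mu))) in *.
  set (w2 := g2 (t - h * mu) + lam * (z2 + mu * t2 - g2 (t - h * mu))) in *.
  assert (E1 : w1 - z1 = (1 - lam) * e1) by (unfold w1, e1, lam; field; lra).
  assert (E2 : w2 - z2 = (1 - lam) * e2) by (unfold w2, e2, lam; field; lra).
  clearbody w1 w2 e1 e2.
  assert (dwz : dist2 (w1, w2) (z1, z2) < lam * rho / 2).
  { eapply Rle_lt_trans; [apply dist2_le_Rabs|]. cbn [fst snd].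
    rewrite E1, E2, !Rabs_mult, (Rabs_right (1 - lam)) by lra.
    assert (2 * (eps * (h * Rabs mu)) < h * rho / 4).
    { unfold eps.
      replace (2 * (rho / (8 * (Rabs mu + 1)) * (h * Rabs mu)))
        with ((h * rho / 4) * (Rabs mu / (Rabs mu + 1))) by (field; lra).
      assert (Rabs mu / (Rabs mu + 1) < 1).
      { apply (Rmult_lt_reg_r (Rabs mu + 1)); [lra|].
        unfold Rdiv. rewrite Rmult_assoc, Rinv_l; lra. }
      assert (0 < h * rho / 4) by nra. nra. }
    assert (h * rho / 4 <= lam * rho / 2).
    { unfold lam. apply (Rmult_le_reg_r (4 * (1 + h))); [lra|]. field_simplify; [|lra].
      assert (0 <= (1 - h) * (h * rho)) by (apply Rmult_le_pos; nra). nra. }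
    pose proof (Rabs_pos e1); pose proof (Rabs_pos e2).
    assert ((1 - lam) * Rabs e1 + (1 - lam) * Rabs e2 <= Rabs e1 + Rabs e2) by nra.
    lra. }
  exists (lam * rho / 2 - dist2 (w1, w2) (z1, z2)). split; [lra|].
  intros x hx. apply Bw. eapply Rle_lt_trans; [apply (dist2_triang _ (z1, z2)) | lra].
Qed.

Lemma Phi_cos_sin Phi s : Phi (cos s, sin s) = (phi1 Phi s, phi2 Phi s).
Proof. unfold phi1, phi2. destruct (Phi (cos s, sin s)); auto. Qed.

Lemma boundary_phi Phi D s : (forall p, boundary D p <-> image_circle Phi p) ->
  boundary D (phi1 Phi s, phi2 Phi s).
Proof. intros H. apply H. exists (cos s, sin s). split; [apply on_circle_cos_sin | apply Phi_cos_sin]. Qed.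

Lemma tangent_vector_neq0 Phi t : C1_diffeo_circle Phi ->
  0 < Derive (phi1 Phi) t ^ 2 + Derive (phi2 Phi) t ^ 2.
Proof. intros [_ [_ [Nz _]]]. apply sum_sq_pos, Nz. Qed.

Lemma point_on_line t1 t2 z1 z2 m1 m2 : 0 < t1 ^ 2 + t2 ^ 2 ->
  - t2 * (m1 - z1) + t1 * (m2 - z2) = 0 ->
  exists mu, m1 = z1 + mu * t1 /\ m2 = z2 + mu * t2.
Proof.
  intros hT hm. exists ((t1 * (m1 - z1) + t2 * (m2 - z2)) / (t1 ^ 2 + t2 ^ 2)).
  split; apply (Rmult_eq_reg_r (t1 ^ 2 + t2 ^ 2)); try lra; field_simplify; try lra.
  - assert (t2 * (- t2 * (m1 - z1) + t1 * (m2 - z2)) = 0) by (rewrite hm; ring). nra.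
  - assert (t1 * (- t2 * (m1 - z1) + t1 * (m2 - z2)) = 0) by (rewrite hm; ring). nra.
Qed.

(* If a boundary point [q] were strictly on the right of the tangent at [Phi(e^{it})],
   the segment from [q] to a point of [D] on the left (given by the orientation) would
   cross the tangent line at a point with a ball around it inside [co D]. *)
Lemma tangent_supporting_line Phi D t : C1_diffeo_circle Phi -> is_open D ->
  (forall p, boundary D p <-> image_circle Phi p) -> orientation_preserving Phi D ->
  ~ Defs.interior (co D) (phi1 Phi t, phi2 Phi t) ->
  forall q, boundary D q ->
    - Derive (phi2 Phi) t * (fst q - phi1 Phi t) + Derive (phi1 Phi) t * (snd q - phi2 Phi t) >= 0.
Proof.
  intros HPhi oD bd orient nint [q1 q2] bq. cbn [fst snd].
  pose proof (tangent_vector_neq0 Phi t HPhi) as hT.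
  destruct HPhi as [Dif _]. destruct (Dif t) as [ex1 ex2].
  set (z1 := phi1 Phi t) in *. set (z2 := phi2 Phi t) in *.
  set (t1 := Derive (phi1 Phi) t) in *. set (t2 := Derive (phi2 Phi) t) in *.
  apply Rnot_lt_ge. intro vq_neg.
  set (vq := - t2 * (q1 - z1) + t1 * (q2 - z2)) in *.
  set (C := co D).
  destruct (orient t) as [e0 [he0 He0]].
  set (s0 := e0 / 2).
  assert (DA : D (z1 - s0 * t2, z2 + s0 * t1)) by (apply He0; unfold s0; lra).
  destruct (oD _ DA) as [rho0 [hrho0 Hrho0]].
  assert (BA : forall x, dist2 (z1 - s0 * t2, z2 + s0 * t1) x < rho0 -> C x)
    by (intros x hx; apply subset_co, Hrho0; auto).
  assert (clq : closure C (q1, q2)) by (apply (closure_mono D), bq; apply subset_co).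
  set (vA := s0 * (t1 ^ 2 + t2 ^ 2)).
  assert (hvA : 0 < vA) by (unfold vA, s0; apply Rmult_lt_0_compat; lra).
  set (lam := - vq / (vA - vq)).
  assert (hlam : 0 < lam < 1).
  { unfold lam. split; [apply Rdiv_lt_0_compat; lra|].
    apply (Rmult_lt_reg_r (vA - vq)); [lra|].
    unfold Rdiv. rewrite Rmult_assoc, Rinv_l by lra. lra. }
  pose proof (convex_ball_toward_closure C (z1 - s0 * t2, z2 + s0 * t1) (q1, q2) rho0 lam
                (co_convex D) hrho0 ltac:(lra) BA clq) as Bm.
  cbn [fst snd] in Bm.
  set (m1 := q1 + lam * (z1 - s0 * t2 - q1)) in *.
  set (m2 := q2 + lam * (z2 + s0 * t1 - q2)) in *.
  assert (on_tangent : - t2 * (m1 - z1) + t1 * (m2 - z2) = 0).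
  { assert (hden : vA - vq <> 0) by lra.
    unfold m1, m2, lam, vq, vA in hden |- *. field. exact hden. }
  destruct (point_on_line t1 t2 z1 z2 m1 m2 hT on_tangent) as [mu [em1 em2]].
  clearbody m1 m2. rewrite em1, em2 in Bm.
  apply nint, (interior_of_ball_on_tangent C (phi1 Phi) (phi2 Phi) t t1 t2 mu (lam * rho0 / 2));
    auto.
  - apply co_convex.
  - nra.
  - apply Derive_correct; auto.
  - apply Derive_correct; auto.
  - intro s. apply (closure_mono D); [apply subset_co | apply boundary_phi; auto].
Qed.

Lemma is_derive_lin_comb (f g : R -> R) x a b c1 c2 k1 k2 : is_derive f x a -> is_derive g x b ->
  is_derive (fun s => c1 * (f s - k1) + c2 * (g s - k2)) x (c1 * a + c2 * b).
Proof.
  intros Df Dg. auto_derive.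
  - split; [eexists; exact Df | split; [eexists; exact Dg | auto]].
  - change (Derive (fun y => f y) x) with (Derive f x). change (Derive (fun y => g y) x) with (Derive g x).
    rewrite (is_derive_unique f x a Df), (is_derive_unique g x b Dg). ring.
Qed.

Lemma vector_eq0_of_components t1 t2 v1 v2 : 0 < t1 ^ 2 + t2 ^ 2 ->
  t1 * v1 + t2 * v2 = 0 -> - t2 * v1 + t1 * v2 = 0 -> v1 = 0 /\ v2 = 0.
Proof.
  intros hT h1 h2.
  assert (A1 : (t1 ^ 2 + t2 ^ 2) * v1 = 0)
    by (transitivity (t1 * (t1 * v1 + t2 * v2) - t2 * (- t2 * v1 + t1 * v2)); [ring|];
        rewrite h1, h2; ring).
  assert (A2 : (t1 ^ 2 + t2 ^ 2) * v2 = 0)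
    by (transitivity (t2 * (t1 * v1 + t2 * v2) + t1 * (- t2 * v1 + t1 * v2)); [ring|];
        rewrite h1, h2; ring).
  apply Rmult_integral in A1. apply Rmult_integral in A2. lra.
Qed.

(* Otherwise the velocity would be parallel to the line and, by periodicity and the mean
   value theorem, would also have a vanishing component along the line somewhere. *)
Lemma curve_off_line Phi (t1 t2 z1 z2 : R) : C1_diffeo_circle Phi -> 0 < t1 ^ 2 + t2 ^ 2 ->
  (forall th, - t2 * (phi1 Phi th - z1) + t1 * (phi2 Phi th - z2) >= 0) ->
  exists th, - t2 * (phi1 Phi th - z1) + t1 * (phi2 Phi th - z2) > 0.
Proof.
  intros [Dif [_ [Nz _]]] hT Hge. apply NNPP. intro Hn.
  assert (on_line : forall th, - t2 * (phi1 Phi th - z1) + t1 * (phi2 Phi th - z2) = 0).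
  { intro th. specialize (Hge th). apply Rge_le in Hge.
    destruct (Rle_lt_or_eq_dec _ _ Hge) as [h|h]; auto.
    exfalso. apply Hn. exists th. lra. }
  assert (normal_vel : forall th, - t2 * Derive (phi1 Phi) th + t1 * Derive (phi2 Phi) th = 0).
  { intro th. destruct (Dif th) as [e1 e2].
    pose proof (is_derive_lin_comb _ _ th _ _ (- t2) t1 z1 z2
                  (Derive_correct _ _ e1) (Derive_correct _ _ e2)) as D1.
    assert (D0 : is_derive (fun s => - t2 * (phi1 Phi s - z1) + t1 * (phi2 Phi s - z2)) th 0).
    { apply (is_derive_ext (fun _ => 0)); [intro s; rewrite on_line; auto | auto_derive; auto]. }
    rewrite <- (is_derive_unique _ _ _ D1). exact (is_derive_unique _ _ _ D0). }
  set (u := fun s => t1 * (phi1 Phi s - 0) + t2 * (phi2 Phi s - 0)).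
  assert (Du : forall s, is_derive u s (t1 * Derive (phi1 Phi) s + t2 * Derive (phi2 Phi) s))
    by (intro s; destruct (Dif s); apply is_derive_lin_comb; apply Derive_correct; auto).
  destruct (MVT_gen u 0 (2 * PI) (fun s => t1 * Derive (phi1 Phi) s + t2 * Derive (phi2 Phi) s))
    as [c [_ Ec]].
  - intros. apply Du.
  - intros x _. apply derivable_continuous_pt. eexists. apply is_derive_Reals, Du.
  - assert (periodic : u (2 * PI) = u 0)
      by (unfold u, phi1, phi2; rewrite cos_2PI, sin_2PI, cos_0, sin_0; auto).
    pose proof PI_RGT_0.
    assert (tangent_vel : t1 * Derive (phi1 Phi) c + t2 * Derive (phi2 Phi) c = 0).
    { rewrite periodic, Rminus_0_r in Ec.
      assert (E : (t1 * Derive (phi1 Phi) c + t2 * Derive (phi2 Phi) c) * (2 * PI) = 0) by lra.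
      apply Rmult_integral in E. destruct E; auto. lra. }
    apply (Nz c). destruct (vector_eq0_of_components t1 t2 _ _ hT tangent_vel (normal_vel c))
      as [-> ->]. reflexivity.
Qed.

(** * Barriers and Hopf's lemma *)

Definition annulus (lo hi : R) (p : pt) : Prop := lo <= fst p ^ 2 + snd p ^ 2 <= hi.

Lemma annulus_closed lo hi : is_closed (annulus lo hi).
Proof.
  intros p cl. unfold annulus. apply NNPP. intro n.
  set (g := fst p ^ 2 + snd p ^ 2) in *.
  assert (Hn : g < lo \/ hi < g) by lra.
  set (e := Rmax (lo - g) (g - hi)).
  pose proof (Rmax_l (lo - g) (g - hi)); pose proof (Rmax_r (lo - g) (g - hi)).
  assert (he : 0 < e) by (unfold e in *; lra).
  destruct (contR_at_in_norm_sq (fun _ => True) p e he) as [d [hd Hd]].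
  destruct (cl d hd) as [q [[h1 h2] hq]].
  specialize (Hd q I hq). apply Rabs_def2 in Hd. fold g in Hd.
  unfold e, Rmax in *. destruct Rle_dec; lra.
Qed.

Lemma in_clB_closed : is_closed in_clB.
Proof.
  intros p cl. assert (annulus 0 1 p) as A; [|unfold annulus, in_clB in *; lra].
  apply annulus_closed. apply (closure_mono in_clB); auto.
  intros x hx. unfold annulus, in_clB in *.
  pose proof (pow2_ge_0 (fst x)); pose proof (pow2_ge_0 (snd x)); lra.
Qed.

Lemma annulus_within_unit_square lo : within_unit_square (annulus lo 1).
Proof.
  intros p h. unfold annulus in h.
  pose proof (pow2_ge_0 (fst p)); pose proof (pow2_ge_0 (snd p)). split; split; nra.
Qed.

Lemma in_clB_within_unit_square : within_unit_square in_clB.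
Proof.
  intros p h. unfold in_clB in h.
  pose proof (pow2_ge_0 (fst p)); pose proof (pow2_ge_0 (snd p)). split; split; nra.
Qed.

Lemma sq_sub_sq_lt q1 s r : Rabs q1 <= 1 -> 0 < r <= 1 -> Rabs (s - q1) < r ->
  Rabs (s ^ 2 - q1 ^ 2) < 3 * r.
Proof.
  intros h1 hr hs. replace (s ^ 2 - q1 ^ 2) with ((s - q1) * ((s - q1) + 2 * q1)) by ring.
  rewrite Rabs_mult. pose proof (Rabs_triang (s - q1) (2 * q1)) as H.
  rewrite Rabs_mult, (Rabs_right 2) in H by lra.
  pose proof (Rabs_pos (s - q1)).
  assert (Rabs (s - q1) * Rabs (s - q1 + 2 * q1) <= Rabs (s - q1) * 3)
    by (apply Rmult_le_compat_l; lra).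
  lra.
Qed.

Lemma strictly_subharmonic_at_of_derivs (S : pt -> Prop) (F : pt -> R)
    (Fx Fy Fxx Fyy : R -> R -> R) lo p1 p2 :
  lo < p1 ^ 2 + p2 ^ 2 < 1 ->
  (forall x y, lo < x ^ 2 + y ^ 2 < 1 ->
     S (x, y) /\
     is_derive (fun s => F (s, y)) x (Fx x y) /\ is_derive (fun s => F (x, s)) y (Fy x y) /\
     is_derive (fun s => Fx s y) x (Fxx x y) /\ is_derive (fun s => Fy x s) y (Fyy x y)) ->
  0 < Fxx p1 p2 + Fyy p1 p2 ->
  strictly_subharmonic_at (fun q => S q /\ in_B q) F (p1, p2).
Proof.
  intros hp HF pos.
  set (gap := Rmin (1 - (p1 ^ 2 + p2 ^ 2)) ((p1 ^ 2 + p2 ^ 2) - lo)).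
  assert (hg : 0 < gap /\ gap <= 1 - (p1 ^ 2 + p2 ^ 2) /\ gap <= (p1 ^ 2 + p2 ^ 2) - lo).
  { unfold gap. split; [apply Rmin_pos; lra | split; [apply Rmin_l | apply Rmin_r]]. }
  clearbody gap.
  set (r := Rmin 1 (gap / 4)).
  assert (hr : 0 < r <= 1) by (unfold r; split; [apply Rmin_pos; lra | apply Rmin_l]).
  assert (r <= gap / 4) by apply Rmin_r.
  clearbody r.
  assert (b1 : Rabs p1 <= 1) by (apply Rabs_le; split; nra).
  assert (b2 : Rabs p2 <= 1) by (apply Rabs_le; split; nra).
  destruct (HF p1 p2 hp) as [_ [_ [_ [Dxx Dyy]]]].
  exists r, (fun s => Fx s p2), (fun s => Fy p1 s), (Fxx p1 p2), (Fyy p1 p2).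
  simpl. split; [lra|]. split; [|split; [|split; [|split]]]; auto.
  - intros x hx. pose proof (sq_sub_sq_lt p1 x r b1 hr hx) as Q. apply Rabs_def2 in Q.
    destruct (HF x p2 ltac:(lra)) as [Sx [Dx _]].
    split; [split; [auto | unfold in_B; simpl; lra] | auto].
  - intros y hy. pose proof (sq_sub_sq_lt p2 y r b2 hr hy) as Q. apply Rabs_def2 in Q.
    destruct (HF p1 y ltac:(lra)) as [Sy [_ [Dy _]]].
    split; [split; [auto | unfold in_B; simpl; lra] | auto].
Qed.

Definition sq_dist (a1 a2 x y : R) : R := (a1 - x) ^ 2 + (a2 - y) ^ 2.

(* The Poisson kernel of the disk of radius |a|, with pole at its boundary point a. *)
Definition poisson (a1 a2 x y : R) : R :=
  (a1 ^ 2 + a2 ^ 2 - (x ^ 2 + y ^ 2)) / sq_dist a1 a2 x y.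

Definition poisson_x (a1 a2 x y : R) : R :=
  (2 * (a1 - x) * (a1 ^ 2 + a2 ^ 2 - (x ^ 2 + y ^ 2)) - 2 * x * sq_dist a1 a2 x y)
  / sq_dist a1 a2 x y ^ 2.
Definition poisson_y (a1 a2 x y : R) : R :=
  (2 * (a2 - y) * (a1 ^ 2 + a2 ^ 2 - (x ^ 2 + y ^ 2)) - 2 * y * sq_dist a1 a2 x y)
  / sq_dist a1 a2 x y ^ 2.
Definition poisson_xx (a1 a2 x y : R) : R :=
  ((- 2 * (a1 ^ 2 + a2 ^ 2 - (x ^ 2 + y ^ 2)) - 2 * sq_dist a1 a2 x y) * sq_dist a1 a2 x y
   + 4 * (a1 - x) * (2 * (a1 - x) * (a1 ^ 2 + a2 ^ 2 - (x ^ 2 + y ^ 2)) - 2 * x * sq_dist a1 a2 x y))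
  / sq_dist a1 a2 x y ^ 3.
Definition poisson_yy (a1 a2 x y : R) : R :=
  ((- 2 * (a1 ^ 2 + a2 ^ 2 - (x ^ 2 + y ^ 2)) - 2 * sq_dist a1 a2 x y) * sq_dist a1 a2 x y
   + 4 * (a2 - y) * (2 * (a2 - y) * (a1 ^ 2 + a2 ^ 2 - (x ^ 2 + y ^ 2)) - 2 * y * sq_dist a1 a2 x y))
  / sq_dist a1 a2 x y ^ 3.

Lemma poisson_derivs a1 a2 x y : sq_dist a1 a2 x y <> 0 ->
  is_derive (fun s => poisson a1 a2 s y) x (poisson_x a1 a2 x y) /\
  is_derive (fun s => poisson a1 a2 x s) y (poisson_y a1 a2 x y) /\
  is_derive (fun s => poisson_x a1 a2 s y) x (poisson_xx a1 a2 x y) /\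
  is_derive (fun s => poisson_y a1 a2 x s) y (poisson_yy a1 a2 x y).
Proof.
  unfold poisson, poisson_x, poisson_y, poisson_xx, poisson_yy, sq_dist.
  intro nz. split; [|split; [|split]];
    auto_derive; try (repeat split; intro E; apply nz; nra); field; auto.
Qed.

Lemma poisson_harmonic a1 a2 x y : sq_dist a1 a2 x y <> 0 ->
  poisson_xx a1 a2 x y + poisson_yy a1 a2 x y = 0.
Proof. unfold poisson_xx, poisson_yy, sq_dist. intro nz. field. auto. Qed.

Definition inv_norm_sq (x y : R) : R := / (x ^ 2 + y ^ 2).
Definition inv_norm_sq_x (x y : R) : R := - 2 * x / (x ^ 2 + y ^ 2) ^ 2.
Definition inv_norm_sq_y (x y : R) : R := - 2 * y / (x ^ 2 + y ^ 2) ^ 2.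
Definition inv_norm_sq_xx (x y : R) : R := (6 * x ^ 2 - 2 * y ^ 2) / (x ^ 2 + y ^ 2) ^ 3.
Definition inv_norm_sq_yy (x y : R) : R := (6 * y ^ 2 - 2 * x ^ 2) / (x ^ 2 + y ^ 2) ^ 3.

Lemma inv_norm_sq_derivs x y : x ^ 2 + y ^ 2 <> 0 ->
  is_derive (fun s => inv_norm_sq s y) x (inv_norm_sq_x x y) /\
  is_derive (fun s => inv_norm_sq x s) y (inv_norm_sq_y x y) /\
  is_derive (fun s => inv_norm_sq_x s y) x (inv_norm_sq_xx x y) /\
  is_derive (fun s => inv_norm_sq_y x s) y (inv_norm_sq_yy x y).
Proof.
  unfold inv_norm_sq, inv_norm_sq_x, inv_norm_sq_y, inv_norm_sq_xx, inv_norm_sq_yy.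
  intro nz. split; [|split; [|split]];
    auto_derive; try (repeat split; intro E; apply nz; nra); field; auto.
Qed.

Lemma inv_norm_sq_laplacian x y : x ^ 2 + y ^ 2 <> 0 ->
  inv_norm_sq_xx x y + inv_norm_sq_yy x y = 4 / (x ^ 2 + y ^ 2) ^ 2.
Proof. unfold inv_norm_sq_xx, inv_norm_sq_yy. intro nz. field. auto. Qed.

Definition barrier_in (a1 a2 c1 c2 : R) (p : pt) : R :=
  c1 * (poisson a1 a2 (fst p) (snd p) - 1 / 6) + c2 * (fst p ^ 2 + snd p ^ 2 - 1).

Definition barrier_out (b : R) (p : pt) : R := b * (inv_norm_sq (fst p) (snd p) - 1).

Lemma barrier_in_contR S a1 a2 c1 c2 p : sq_dist a1 a2 (fst p) (snd p) <> 0 ->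
  contR_at_in S (barrier_in a1 a2 c1 c2) p.
Proof.
  intros nz. unfold barrier_in, poisson, Rdiv.
  apply contR_at_in_plus; apply contR_at_in_scal.
  - apply (contR_at_in_ext S (fun q => (a1 ^ 2 + a2 ^ 2 + 0 * fst q + 0 * snd q
             + -1 * (fst q ^ 2 + snd q ^ 2)) * / ((a1 ^ 2 + a2 ^ 2 + (- 2 * a1) * fst q
             + (- 2 * a2) * snd q) + (fst q ^ 2 + snd q ^ 2)) + - (1 * / 6))).
    { intro q. unfold sq_dist.
      replace (a1 ^ 2 + a2 ^ 2 + -2 * a1 * fst q + -2 * a2 * snd q + (fst q ^ 2 + snd q ^ 2))
        with ((a1 - fst q) ^ 2 + (a2 - snd q) ^ 2) by ring. ring. }
    apply contR_at_in_plus; [|apply contR_at_in_const].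
    apply contR_at_in_mult.
    + apply contR_at_in_plus; [apply contR_at_in_affine|].
      apply contR_at_in_scal, contR_at_in_norm_sq.
    + apply contR_at_in_inv; [unfold sq_dist in nz; intro E; apply nz; rewrite <- E; ring|].
      apply contR_at_in_plus; [apply contR_at_in_affine | apply contR_at_in_norm_sq].
  - apply (contR_at_in_ext S (fun q => (fst q ^ 2 + snd q ^ 2) + -1)); [intro; ring|].
    apply contR_at_in_plus; [apply contR_at_in_norm_sq | apply contR_at_in_const].
Qed.

Lemma barrier_out_contR S b p : fst p ^ 2 + snd p ^ 2 <> 0 -> contR_at_in S (barrier_out b) p.
Proof.
  intros nz. unfold barrier_out, inv_norm_sq. apply contR_at_in_scal.
  apply (contR_at_in_ext S (fun q => / (fst q ^ 2 + snd q ^ 2) + -1)); [intro; ring|].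
  apply contR_at_in_plus; [|apply contR_at_in_const].
  apply contR_at_in_inv; auto. apply contR_at_in_norm_sq.
Qed.

Lemma barrier_in_strictly_subharmonic S a1 a2 c1 c2 p1 p2 :
  0 < c2 -> p1 ^ 2 + p2 ^ 2 < 1 ->
  (forall x y, x ^ 2 + y ^ 2 < 1 -> S (x, y) /\ sq_dist a1 a2 x y <> 0) ->
  strictly_subharmonic_at (fun q => S q /\ in_B q) (barrier_in a1 a2 c1 c2) (p1, p2).
Proof.
  intros hc2 hp HS.
  apply (strictly_subharmonic_at_of_derivs S _
           (fun x y => c1 * poisson_x a1 a2 x y + c2 * (2 * x))
           (fun x y => c1 * poisson_y a1 a2 x y + c2 * (2 * y))
           (fun x y => c1 * poisson_xx a1 a2 x y + c2 * 2)
           (fun x y => c1 * poisson_yy a1 a2 x y + c2 * 2) (- 1)).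
  - pose proof (pow2_ge_0 p1); pose proof (pow2_ge_0 p2). lra.
  - intros x y [_ hxy]. destruct (HS x y hxy) as [Sxy nz].
    destruct (poisson_derivs a1 a2 x y nz) as [Dx [Dy [Dxx Dyy]]].
    unfold barrier_in; simpl.
    split; [auto | split; [|split; [|split]]]; auto_derive;
      try (eexists; eassumption).
    + replace (Derive (fun s => poisson a1 a2 s y) x) with (poisson_x a1 a2 x y)
        by (symmetry; apply is_derive_unique; exact Dx). ring.
    + replace (Derive (fun s => poisson a1 a2 x s) y) with (poisson_y a1 a2 x y)
        by (symmetry; apply is_derive_unique; exact Dy). ring.
    + replace (Derive (fun s => poisson_x a1 a2 s y) x) with (poisson_xx a1 a2 x y)
        by (symmetry; apply is_derive_unique; exact Dxx). ring.
    + replace (Derive (fun s => poisson_y a1 a2 x s) y) with (poisson_yy a1 a2 x y)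
        by (symmetry; apply is_derive_unique; exact Dyy). ring.
  - destruct (HS p1 p2 hp) as [_ nzp].
    replace (c1 * poisson_xx a1 a2 p1 p2 + c2 * 2 + (c1 * poisson_yy a1 a2 p1 p2 + c2 * 2))
      with (c1 * (poisson_xx a1 a2 p1 p2 + poisson_yy a1 a2 p1 p2) + 4 * c2) by ring.
    rewrite poisson_harmonic by exact nzp. lra.
Qed.

Lemma barrier_out_strictly_subharmonic S b lo p1 p2 :
  0 < b -> 0 <= lo -> lo < p1 ^ 2 + p2 ^ 2 < 1 ->
  (forall x y, lo < x ^ 2 + y ^ 2 < 1 -> S (x, y)) ->
  strictly_subharmonic_at (fun q => S q /\ in_B q) (barrier_out b) (p1, p2).
Proof.
  intros hb hlo hp HS.
  apply (strictly_subharmonic_at_of_derivs S _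
           (fun x y => b * inv_norm_sq_x x y) (fun x y => b * inv_norm_sq_y x y)
           (fun x y => b * inv_norm_sq_xx x y) (fun x y => b * inv_norm_sq_yy x y) lo); auto.
  - intros x y hxy. assert (nz : x ^ 2 + y ^ 2 <> 0) by lra.
    destruct (inv_norm_sq_derivs x y nz) as [Dx [Dy [Dxx Dyy]]].
    unfold barrier_out; simpl.
    split; [auto | split; [|split; [|split]]]; auto_derive;
      try (eexists; eassumption).
    + replace (Derive (fun s => inv_norm_sq s y) x) with (inv_norm_sq_x x y)
        by (symmetry; apply is_derive_unique; exact Dx). ring.
    + replace (Derive (fun s => inv_norm_sq x s) y) with (inv_norm_sq_y x y)
        by (symmetry; apply is_derive_unique; exact Dy). ring.
    + replace (Derive (fun s => inv_norm_sq_x s y) x) with (inv_norm_sq_xx x y)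
        by (symmetry; apply is_derive_unique; exact Dxx). ring.
    + replace (Derive (fun s => inv_norm_sq_y x s) y) with (inv_norm_sq_yy x y)
        by (symmetry; apply is_derive_unique; exact Dyy). ring.
  - rewrite <- Rmult_plus_distr_l, inv_norm_sq_laplacian by lra.
    apply Rmult_lt_0_compat; auto. apply Rdiv_lt_0_compat; [lra | apply pow_lt; lra].
Qed.

Lemma sq_dist_scaled_unit e1 e2 s x1 x2 : e1 ^ 2 + e2 ^ 2 = 1 ->
  sq_dist ((1 + s) * e1) ((1 + s) * e2) x1 x2
  = s ^ 2 + s * (1 - (x1 ^ 2 + x2 ^ 2)) + (1 + s) * ((e1 - x1) ^ 2 + (e2 - x2) ^ 2).
Proof.
  intros he. unfold sq_dist.
  transitivity (s ^ 2 + s * (1 - (x1 ^ 2 + x2 ^ 2)) + (1 + s) * ((e1 - x1) ^ 2 + (e2 - x2) ^ 2)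
                + s * (1 + s) * (e1 ^ 2 + e2 ^ 2 - 1)); [ring | rewrite he; ring].
Qed.

Lemma poisson_mul_sq_dist a1 a2 x y : sq_dist a1 a2 x y <> 0 ->
  poisson a1 a2 x y * sq_dist a1 a2 x y = a1 ^ 2 + a2 ^ 2 - (x ^ 2 + y ^ 2).
Proof. intros nz. unfold poisson. field. exact nz. Qed.

Lemma sq_le_of_le_sqrt x k : 0 <= x -> 0 <= k -> k <= sqrt x -> k ^ 2 <= x.
Proof.
  intros hx hk h. apply sqrt_le_0; [apply pow2_ge_0 | auto |].
  rewrite sqrt_pow2; auto.
Qed.

Section Hopf.

Variables (G : pt -> R) (e1 e2 ka : R).
Hypothesis G_contR : forall p, in_clB p -> contR_at_in in_clB G p.
Hypothesis G_harmonic : harmonic_on_B G.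
Hypothesis G_nonneg : forall p, on_circle p -> 0 <= G p.
Hypothesis e_unit : e1 ^ 2 + e2 ^ 2 = 1.
Hypothesis G_pos : 0 < G (e1, e2).
Hypothesis ka_bounds : 0 < ka <= 1.
Hypothesis G_near_e : forall p, in_clB p -> dist2 (e1, e2) p < ka -> G (e1, e2) / 2 < G p.

(* The pole of the Poisson kernel sits at distance [s] outside the circle, beyond [e];
   [s] is small enough for the kernel to be at most 1/6 on the part of the circle
   where [G] is not known to be large. *)
Let s := ka ^ 2 / 18.
Let a1 := (1 + s) * e1.
Let a2 := (1 + s) * e2.
Let c := G (e1, e2) * s / 6.

Let s_bounds : 0 < s <= 1 / 18.
Proof. unfold s. split; [apply Rdiv_lt_0_compat|]; nra. Qed.

Let c_pos : 0 < c.
Proof. unfold c. pose proof s_bounds. apply Rdiv_lt_0_compat; nra. Qed.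

Let sq_dist_ge x1 x2 : x1 ^ 2 + x2 ^ 2 <= 1 -> s ^ 2 <= sq_dist a1 a2 x1 x2.
Proof.
  intros hx. unfold a1, a2. rewrite sq_dist_scaled_unit by auto. pose proof s_bounds.
  assert (0 <= s * (1 - (x1 ^ 2 + x2 ^ 2))) by (apply Rmult_le_pos; lra).
  assert (0 <= (1 + s) * ((e1 - x1) ^ 2 + (e2 - x2) ^ 2)).
  { apply Rmult_le_pos; [lra|]. pose proof (pow2_ge_0 (e1 - x1)); pose proof (pow2_ge_0 (e2 - x2)). lra. }
  lra.
Qed.

Let sq_dist_pos x1 x2 : x1 ^ 2 + x2 ^ 2 <= 1 -> 0 < sq_dist a1 a2 x1 x2.
Proof. intros hx. pose proof (sq_dist_ge x1 x2 hx). pose proof s_bounds. nra. Qed.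

Lemma barrier_in_le_on_circle p : on_circle p -> barrier_in a1 a2 c (c / 12) p <= G p.
Proof.
  destruct p as [p1 p2]. unfold on_circle, barrier_in; cbn [fst snd]. intros hp. rewrite hp.
  pose proof s_bounds. pose proof c_pos.
  assert (hp' : p1 ^ 2 + p2 ^ 2 <= 1) by lra.
  pose proof (sq_dist_ge p1 p2 hp') as hD. pose proof (sq_dist_pos p1 p2 hp') as hD0.
  pose proof (poisson_mul_sq_dist a1 a2 p1 p2 ltac:(lra)) as HP.
  replace (a1 ^ 2 + a2 ^ 2) with ((1 + s) ^ 2) in HP
    by (unfold a1, a2; transitivity ((1 + s) ^ 2 * (e1 ^ 2 + e2 ^ 2)); [rewrite e_unit|]; ring).
  rewrite hp in HP.
  set (P := poisson a1 a2 p1 p2) in *. set (D := sq_dist a1 a2 p1 p2) in *.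
  assert (hP0 : 0 <= P) by (apply (Rmult_le_reg_r D); auto; rewrite HP; nra).
  destruct (Rlt_or_le (dist2 (e1, e2) (p1, p2)) ka) as [near|far].
  - specialize (G_near_e (p1, p2) hp' near).
    assert (s * P <= 3) by (apply (Rmult_le_reg_r D); auto; rewrite Rmult_assoc, HP; nra).
    assert (c * P <= G (e1, e2) / 2).
    { unfold c. replace (G (e1, e2) * s / 6 * P) with (G (e1, e2) * (s * P) / 6) by field.
      assert (G (e1, e2) * (s * P) <= G (e1, e2) * 3) by (apply Rmult_le_compat_l; lra). lra. }
    assert (0 <= c * (1 / 6)) by lra. nra.
  - assert (hfar : ka ^ 2 <= (e1 - p1) ^ 2 + (e2 - p2) ^ 2).
    { pose proof (pow2_ge_0 (e1 - p1)); pose proof (pow2_ge_0 (e2 - p2)).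
      apply sq_le_of_le_sqrt; [lra | lra | exact far]. }
    assert (hDk : 18 * s <= D).
    { unfold D, a1, a2. rewrite sq_dist_scaled_unit, hp by auto.
      replace (18 * s) with (ka ^ 2) by (unfold s; field). nra. }
    assert (P <= 1 / 6) by (apply (Rmult_le_reg_r D); auto; rewrite HP; nra).
    assert (c * (P - 1 / 6) <= 0) by nra.
    pose proof (G_nonneg (p1, p2) hp). lra.
Qed.

Lemma barrier_in_le p : in_clB p -> barrier_in a1 a2 c (c / 12) p <= G p.
Proof.
  apply (le_harmonic_of_strictly_subharmonic in_clB); auto using in_clB_closed, in_clB_within_unit_square.
  - intros q hq. apply barrier_in_contR. pose proof (sq_dist_pos (fst q) (snd q) hq). lra.
  - intros [p1 p2] hp. unfold in_clB in hp; cbn [fst snd] in hp.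
    destruct (Rle_lt_or_eq_dec _ _ hp) as [hlt|heq].
    + right. apply barrier_in_strictly_subharmonic; auto; [lra|].
      intros x y hxy. split; [unfold in_clB; simpl; lra|].
      pose proof (sq_dist_pos x y ltac:(lra)). lra.
    + left. apply barrier_in_le_on_circle. exact heq.
Qed.

Lemma G_ge_on_half_circle p : fst p ^ 2 + snd p ^ 2 = 1 / 4 -> c / 12 <= G p.
Proof.
  destruct p as [p1 p2]. cbn [fst snd]. intros hp.
  assert (hp' : p1 ^ 2 + p2 ^ 2 <= 1) by lra.
  eapply Rle_trans; [|apply barrier_in_le; unfold in_clB; simpl; lra].
  unfold barrier_in. cbn [fst snd]. rewrite hp.
  pose proof s_bounds. pose proof c_pos. pose proof (sq_dist_pos p1 p2 hp') as hD0.
  pose proof (poisson_mul_sq_dist a1 a2 p1 p2 ltac:(lra)) as HP.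
  replace (a1 ^ 2 + a2 ^ 2) with ((1 + s) ^ 2) in HP
    by (unfold a1, a2; transitivity ((1 + s) ^ 2 * (e1 ^ 2 + e2 ^ 2)); [rewrite e_unit|]; ring).
  rewrite hp in HP.
  set (P := poisson a1 a2 p1 p2) in *. set (D := sq_dist a1 a2 p1 p2) in *.
  (* [D <= (1 + s + 1/2)^2] by the triangle inequality, whence [P >= 1/3]. *)
  assert (hDu : D <= (1 + s) ^ 2 + (1 + s) + 1 / 4).
  { unfold D, sq_dist, a1, a2.
    assert (0 <= (e1 + 2 * p1) ^ 2 + (e2 + 2 * p2) ^ 2)
      by (pose proof (pow2_ge_0 (e1 + 2 * p1)); pose proof (pow2_ge_0 (e2 + 2 * p2)); lra).
    assert (E0 : (e1 + 2 * p1) ^ 2 + (e2 + 2 * p2) ^ 2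
                 = (e1 ^ 2 + e2 ^ 2) + 4 * (e1 * p1 + e2 * p2) + 4 * (p1 ^ 2 + p2 ^ 2)) by ring.
    rewrite e_unit, hp in E0.
    assert (E : ((1 + s) * e1 - p1) ^ 2 + ((1 + s) * e2 - p2) ^ 2
                = (1 + s) ^ 2 * (e1 ^ 2 + e2 ^ 2) - 2 * (1 + s) * (e1 * p1 + e2 * p2)
                  + (p1 ^ 2 + p2 ^ 2)) by ring.
    rewrite E, e_unit, hp. nra. }
  assert (1 / 3 <= P) by (apply (Rmult_le_reg_r D); auto; rewrite HP; nra).
  nra.
Qed.

Lemma barrier_out_le p : annulus (1 / 4) 1 p -> barrier_out (c / 36) p <= G p.
Proof.
  pose proof c_pos.
  apply (le_harmonic_of_strictly_subharmonic (annulus (1 / 4) 1));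
    auto using annulus_closed, annulus_within_unit_square.
  - intros q hq. unfold annulus, in_clB in *. lra.
  - intros q hq. apply barrier_out_contR. unfold annulus in hq. lra.
  - intros [p1 p2] [hlo hhi]. cbn [fst snd] in hlo, hhi.
    unfold barrier_out, inv_norm_sq. cbn [fst snd].
    destruct (Rle_lt_or_eq_dec _ _ hhi) as [hlt|heq].
    + destruct (Rle_lt_or_eq_dec _ _ hlo) as [hlt2|heq2].
      * right. apply (barrier_out_strictly_subharmonic _ _ (1 / 4)); try lra.
        intros x y hxy. unfold annulus; simpl; lra.
      * left. rewrite <- heq2.
        pose proof (G_ge_on_half_circle (p1, p2) ltac:(simpl; lra)).
        replace (/ (1 / 4)) with 4 by field. lra.
    + left. rewrite heq, Rinv_1. replace (c / 36 * (1 - 1)) with 0 by ring.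
      apply G_nonneg. unfold on_circle; simpl; lra.
Qed.

End Hopf.

Lemma hopf_lower_bound (G : pt -> R) e1 e2 :
  (forall p, in_clB p -> contR_at_in in_clB G p) -> harmonic_on_B G ->
  (forall p, on_circle p -> 0 <= G p) -> e1 ^ 2 + e2 ^ 2 = 1 -> 0 < G (e1, e2) ->
  exists b, 0 < b /\ forall p1 p2 r, p1 ^ 2 + p2 ^ 2 = 1 -> 1 / 2 <= r <= 1 ->
    b * (/ r ^ 2 - 1) <= G (r * p1, r * p2).
Proof.
  intros cG hG G0 he Gpos.
  assert (ce : in_clB (e1, e2)) by (unfold in_clB; simpl; lra).
  destruct (cG _ ce (G (e1, e2) / 2) ltac:(lra)) as [k0 [hk0 Hk0]].
  pose proof (Rmin_l k0 1). pose proof (Rmin_r k0 1).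
  set (ka := Rmin k0 1) in *.
  assert (hka : 0 < ka <= 1) by (split; [apply Rmin_pos|]; lra).
  assert (near : forall p, in_clB p -> dist2 (e1, e2) p < ka -> G (e1, e2) / 2 < G p).
  { intros p hp hd. specialize (Hk0 p hp ltac:(lra)). apply Rabs_def2 in Hk0. lra. }
  exists (G (e1, e2) * (ka ^ 2 / 18) / 6 / 36). split.
  { assert (0 < ka ^ 2) by (apply pow_lt; lra).
    repeat apply Rdiv_lt_0_compat; try apply Rmult_lt_0_compat; lra. }
  intros p1 p2 r hp hr.
  assert (Er : (r * p1) ^ 2 + (r * p2) ^ 2 = r ^ 2)
    by (transitivity (r ^ 2 * (p1 ^ 2 + p2 ^ 2)); [ring | rewrite hp; ring]).
  assert (A : annulus (1 / 4) 1 (r * p1, r * p2)) by (unfold annulus; cbn [fst snd]; rewrite Er; nra).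
  pose proof (barrier_out_le G e1 e2 ka cG hG G0 he Gpos hka near _ A) as Hb.
  unfold barrier_out, inv_norm_sq in Hb. cbn [fst snd] in Hb. rewrite Er in Hb. exact Hb.
Qed.

(** * The Jacobian on the convex part of the boundary *)

Lemma unit_circle_angle x y : x ^ 2 + y ^ 2 = 1 -> exists t, x = cos t /\ y = sin t.
Proof.
  intros h. assert (hx : -1 <= x <= 1) by (split; nra).
  assert (E : sqrt (1 - x²) = Rabs y).
  { rewrite <- sqrt_Rsqr_abs. f_equal. unfold Rsqr. nra. }
  destruct (Rle_or_lt 0 y) as [hy|hy].
  - exists (acos x). rewrite cos_acos, sin_acos by auto. rewrite E, Rabs_right; lra.
  - exists (- acos x). rewrite cos_neg, sin_neg, cos_acos, sin_acos by auto. rewrite E, Rabs_left; lra.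
Qed.

Lemma C1_on_clB_of_C2_on_B f fx fy : C2_on_B f ->
  (forall p, in_clB p -> contR_at_in in_clB f p) ->
  (forall p, in_B p -> fx p = px f p /\ fy p = py f p) ->
  (forall p, in_clB p -> contR_at_in in_clB fx p /\ contR_at_in in_clB fy p) ->
  C1_on_clB f fx fy.
Proof.
  intros C2 Cf E Cd. split.
  - intros q hq. destruct (E q hq) as [-> ->]. destruct (C2 q hq) as [ex [ey _]].
    split; apply Derive_correct; auto.
  - intros q hq. destruct (Cd q hq). auto.
Qed.

Lemma C1_on_clB_lin_comb f fx fy g gx gy c1 c2 k1 k2 :
  C1_on_clB f fx fy -> C1_on_clB g gx gy ->
  C1_on_clB (fun q => c1 * (f q - k1) + c2 * (g q - k2))
            (fun q => c1 * fx q + c2 * gx q) (fun q => c1 * fy q + c2 * gy q).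
Proof.
  intros [Df Cf] [Dg Cg]. split.
  - intros q hq. destruct (Df q hq) as [f1 f2]. destruct (Dg q hq) as [g1 g2].
    split; apply is_derive_lin_comb; auto.
  - intros q hq. destruct (Cf q hq) as [a1 [a2 a3]]. destruct (Cg q hq) as [b1 [b2 b3]].
    split; [apply contR_at_in_lin_comb; auto|].
    split; apply contR_at_in_plus; apply contR_at_in_scal; auto.
Qed.

Lemma harmonic_on_B_lin_comb f g c1 c2 k1 k2 : C2_on_B f -> C2_on_B g ->
  (forall p, in_B p -> laplacian f p = 0 /\ laplacian g p = 0) ->
  harmonic_on_B (fun q => c1 * (f q - k1) + c2 * (g q - k2)).
Proof.
  intros C2f C2g lap [q1 q2] hq. cbn [fst snd].
  destruct (C2f (q1, q2) hq) as [_ [_ [fxx [_ [_ [fyy _]]]]]].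
  destruct (C2g (q1, q2) hq) as [_ [_ [gxx [_ [_ [gyy _]]]]]].
  exists (fun s => c1 * (px f (s, q2) - 0) + c2 * (px g (s, q2) - 0)),
         (fun s => c1 * (py f (q1, s) - 0) + c2 * (py g (q1, s) - 0)),
         (c1 * px (px f) (q1, q2) + c2 * px (px g) (q1, q2)),
         (c1 * py (py f) (q1, q2) + c2 * py (py g) (q1, q2)).
  split; [|split; [|split; [|split]]].
  - intros s hs. destruct (C2f _ hs) as [a1 _]. destruct (C2g _ hs) as [a2 _].
    replace (c1 * (px f (s, q2) - 0) + c2 * (px g (s, q2) - 0))
      with (c1 * px f (s, q2) + c2 * px g (s, q2)) by ring.
    apply is_derive_lin_comb; apply Derive_correct; auto.
  - intros s hs. destruct (C2f _ hs) as [_ [a1 _]]. destruct (C2g _ hs) as [_ [a2 _]].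
    replace (c1 * (py f (q1, s) - 0) + c2 * (py g (q1, s) - 0))
      with (c1 * py f (q1, s) + c2 * py g (q1, s)) by ring.
    apply is_derive_lin_comb; apply Derive_correct; auto.
  - apply is_derive_lin_comb; apply Derive_correct; auto.
  - apply is_derive_lin_comb; apply Derive_correct; auto.
  - destruct (lap _ hq) as [Lf Lg]. unfold laplacian in Lf, Lg.
    transitivity (c1 * (px (px f) (q1, q2) + py (py f) (q1, q2))
                  + c2 * (px (px g) (q1, q2) + py (py g) (q1, q2))); [ring|].
    rewrite Lf, Lg. ring.
Qed.

(* Compare [G (r c0, r s0) >= b (1/r^2 - 1) >= b (1 - r)] with the first-order expansion
   of [G] at [(c0, s0)]. *)
Lemma radial_derivative_le G Gx Gy c0 s0 b : C1_on_clB G Gx Gy -> on_circle (c0, s0) ->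
  G (c0, s0) = 0 -> 0 < b ->
  (forall r, 1 / 2 <= r <= 1 -> b * (/ r ^ 2 - 1) <= G (r * c0, r * s0)) ->
  c0 * Gx (c0, s0) + s0 * Gy (c0, s0) <= - b.
Proof.
  intros RG hc G0 hb Hb.
  set (L := c0 * Gx (c0, s0) + s0 * Gy (c0, s0)).
  apply Rnot_lt_le. intro hL.
  set (e := (L + b) / 4). assert (he : 0 < e) by (unfold e; lra).
  destruct (C1_on_clB_radial_approx G Gx Gy c0 s0 e RG hc he) as [r0 [hr0 Hr0]].
  pose proof (Rmax_l r0 (1 / 2)). pose proof (Rmax_r r0 (1 / 2)).
  assert (Rmax r0 (1 / 2) < 1) by (apply Rmax_lub_lt; lra).
  set (r := (Rmax r0 (1 / 2) + 1) / 2).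
  assert (hr : r0 < r < 1 /\ 1 / 2 <= r) by (unfold r; lra).
  clearbody r. destruct hr as [[hr1 hr2] hr3].
  specialize (Hr0 r (conj hr1 hr2)). rewrite G0 in Hr0. fold L in Hr0.
  specialize (Hb r (conj hr3 (Rlt_le _ _ hr2))).
  assert (hinv : 1 - r <= / r ^ 2 - 1).
  { assert (0 < r ^ 2) by (apply pow_lt; lra).
    assert (/ r ^ 2 * r ^ 2 = 1) by (field; lra).
    assert (0 <= (1 - r) * (1 + r - r ^ 2)) by (apply Rmult_le_pos; nra).
    apply (Rmult_le_reg_r (r ^ 2)); auto. nra. }
  assert (b * (1 - r) <= b * (/ r ^ 2 - 1)) by (apply Rmult_le_compat_l; lra).
  apply Rabs_le_bounds in Hr0.
  assert ((1 - r) * L <= (1 - r) * (- b + 2 * e)) by nra.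
  assert (L <= - b + 2 * e) by (apply (Rmult_le_reg_l (1 - r)); lra).
  unfold e in *. lra.
Qed.

Lemma det_eq_neg_normal_derivative c s a1 a2 b1 b2 : c ^ 2 + s ^ 2 = 1 ->
  a1 * b2 - b1 * a2
  = - (c * (- (- s * a2 + c * b2) * a1 + (- s * a1 + c * b1) * a2)
       + s * (- (- s * a2 + c * b2) * b1 + (- s * a1 + c * b1) * b2)).
Proof.
  intros h. transitivity ((c ^ 2 + s ^ 2) * (a1 * b2 - b1 * a2)); [rewrite h; ring | ring].
Qed.

Lemma hopf_boundary_lemma G Gx Gy e1 e2 c0 s0 : C1_on_clB G Gx Gy -> harmonic_on_B G ->
  (forall p, on_circle p -> 0 <= G p) -> on_circle (e1, e2) -> 0 < G (e1, e2) ->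
  on_circle (c0, s0) -> G (c0, s0) = 0 ->
  c0 * Gx (c0, s0) + s0 * Gy (c0, s0) < 0.
Proof.
  intros RG hG G0 he Ge hc Gc.
  destruct (hopf_lower_bound G e1 e2 (fun q hq => proj1 (proj2 RG q hq)) hG G0 he Ge)
    as [b [hb Hb]].
  enough (c0 * Gx (c0, s0) + s0 * Gy (c0, s0) <= - b) by lra.
  apply (radial_derivative_le G Gx Gy c0 s0 b RG hc Gc hb).
  intros r hr. apply Hb; auto.
Qed.

Lemma C1_on_clB_components (U Ux Uy : pt -> pt) :
  C2_on_B (fun p => fst (U p)) -> C2_on_B (fun p => snd (U p)) -> cont_on in_clB U ->
  (forall p, in_B p ->
     Ux p = (px (fun q => fst (U q)) p, px (fun q => snd (U q)) p) /\
     Uy p = (py (fun q => fst (U q)) p, py (fun q => snd (U q)) p)) ->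
  cont_on in_clB Ux -> cont_on in_clB Uy ->
  C1_on_clB (fun q => fst (U q)) (fun q => fst (Ux q)) (fun q => fst (Uy q)) /\
  C1_on_clB (fun q => snd (U q)) (fun q => snd (Ux q)) (fun q => snd (Uy q)).
Proof.
  intros C2U1 C2U2 cU dU cUx cUy. split; apply C1_on_clB_of_C2_on_B; auto.
  - intros q hq. apply contR_at_in_fst_comp; auto.
  - intros q hq. destruct (dU q hq) as [-> ->]. auto.
  - intros q hq. split; apply contR_at_in_fst_comp; auto.
  - intros q hq. apply contR_at_in_snd_comp; auto.
  - intros q hq. destruct (dU q hq) as [-> ->]. auto.
  - intros q hq. split; apply contR_at_in_snd_comp; auto.
Qed.

Lemma Derive_boundary_values f fx fy (g : R -> R) t : C1_on_clB f fx fy ->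
  (forall s, f (cos s, sin s) = g s) -> ex_derive g t ->
  Derive g t = - sin t * fx (cos t, sin t) + cos t * fy (cos t, sin t).
Proof.
  intros R E ex. apply (C1_on_clB_derive_along_circle f _ _ t _ R).
  apply (is_derive_ext g); [intro s; rewrite E; auto | apply Derive_correct; auto].
Qed.

Theorem lemma5p3 (Phi : pt -> pt) (D : pt -> Prop) (U : pt -> pt)
    (Ux Uy : pt -> pt) :
  C1_diffeo_circle Phi ->
  is_domain D -> is_bounded D ->
  (forall p, boundary D p <-> image_circle Phi p) ->
  orientation_preserving Phi D ->
  C2_on_B (fun p => fst (U p)) -> C2_on_B (fun p => snd (U p)) ->
  cont_on in_clB U ->
  (forall p, in_B p -> laplacian (fun q => fst (U q)) p = 0 /\
                       laplacian (fun q => snd (U q)) p = 0) ->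
  (forall p, on_circle p -> U p = Phi p) ->
  (forall p, in_B p ->
     Ux p = (px (fun q => fst (U q)) p, px (fun q => snd (U q)) p) /\
     Uy p = (py (fun q => fst (U q)) p, py (fun q => snd (U q)) p)) ->
  cont_on in_clB Ux -> cont_on in_clB Uy ->
  forall p, on_circle p -> gamma_c D (Phi p) ->
    fst (Ux p) * snd (Uy p) - fst (Uy p) * snd (Ux p) > 0.
Proof.
  intros HPhi [oD _] _ bdD orient C2U1 C2U2 cU harm bvU dU cUx cUy [p1 p2] hp [_ [_ nint]].
  unfold on_circle in hp; cbn [fst snd] in hp.
  destruct (unit_circle_angle p1 p2 hp) as [t [-> ->]].
  destruct (C1_on_clB_components U Ux Uy C2U1 C2U2 cU dU cUx cUy) as [R1 R2].
  rewrite Phi_cos_sin in nint.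
  pose proof (tangent_supporting_line Phi D t HPhi oD bdD orient nint) as Sup.
  destruct (curve_off_line Phi _ _ (phi1 Phi t) (phi2 Phi t) HPhi (tangent_vector_neq0 Phi t HPhi)
              (fun th => Sup _ (boundary_phi Phi D th bdD))) as [th Hth].
  destruct HPhi as [Dif _]. destruct (Dif t) as [ex1 ex2].
  set (z1 := phi1 Phi t) in *. set (z2 := phi2 Phi t) in *.
  set (t1 := Derive (phi1 Phi) t) in *. set (t2 := Derive (phi2 Phi) t) in *.
  (* The component of [U - Phi(e^{it})] along the inner normal of the supporting line. *)
  set (G := fun q => - t2 * (fst (U q) - z1) + t1 * (snd (U q) - z2)).
  assert (G_nonneg : forall q, on_circle q -> 0 <= G q).
  { intros q hq. unfold G. rewrite (bvU q hq). apply Rge_le, Sup, bdD. exists q; auto. }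
  assert (G_circle : forall s, G (cos s, sin s)
                      = - t2 * (phi1 Phi s - z1) + t1 * (phi2 Phi s - z2)).
  { intro s. unfold G. rewrite bvU, Phi_cos_sin by apply on_circle_cos_sin. auto. }
  pose proof (hopf_boundary_lemma G _ _ _ _ (cos t) (sin t)
    (C1_on_clB_lin_comb _ _ _ _ _ _ (- t2) t1 z1 z2 R1 R2)
    (harmonic_on_B_lin_comb _ _ (- t2) t1 z1 z2 C2U1 C2U2 harm) G_nonneg
    (on_circle_cos_sin th) ltac:(rewrite G_circle; lra)
    (on_circle_cos_sin t) ltac:(rewrite G_circle; unfold z1, z2; ring)) as HL.
  assert (T1 := Derive_boundary_values _ _ _ (phi1 Phi) t R1
                  (fun s => f_equal fst (bvU _ (on_circle_cos_sin s))) ex1).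
  assert (T2 := Derive_boundary_values _ _ _ (phi2 Phi) t R2
                  (fun s => f_equal snd (bvU _ (on_circle_cos_sin s))) ex2).
  fold t1 in T1. fold t2 in T2.
  rewrite (det_eq_neg_normal_derivative (cos t) (sin t)), <- T1, <- T2
    by apply cos_sq_add_sin_sq.
  lra.
Qed.
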